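(* Let $P$ be an incompressible spiral path with $k$ turning points, and let $u$ be its internal endpoint. Then any growth process in the connectivity graph model that grows $P$ from a single node starting at $u$ requires $\Omega(k\log k)$ time steps.
   Context: Shapes. Grid points are integer pairs $(x,y)$; two grid points are adjacent if they are at orthogonal (Manhattan) distance $1$. A shape $S=(V,E)$ is a finite connected graph whose nodes occupy distinct grid points and whose edges join only pairs of nodes occupying adjacent points; shapes are considered up to translation. Growth operations. One node, the anchor $u_0$, is stationary; other nodes move relative to it, and a tree is rooted at $u_0$. A growth operation on a node $u$ toward an adjacent grid point $p$ either (i) if $u$ has no edge to $p$, creates a new node $u'$ at $p$ with edge $uu'$; or (ii) if $p$ is occupied by a node $v$ with $uv\in E$, creates a new node $u'$ at $p$, replaces edge $uv$ by edges $uu',u'v$, and translates by one unit, along the axis of $uv$, the part of the tree hanging from whichever of $u,v$ is farther from $u_0$, away from the other endpoint. In one time step a set of operations is applied concurrently, each node receiving at most one operation and all operations having the same cardinal direction; the displacement of each node is the sum of the unit vectors contributed by the operations on its path to $u_0$. The set is collision-free if no two nodes collide during these motions or end at the same point. Growth processes (connectivity graph model). A growth process from an initial shape $S_0$ performs time steps $t=1,2,\dots$, each applying a collision-free set of growth operations to the current shape; no edges are deleted and no edges are created other than by the operations. It grows $S$ from $S_0$ in $t_f$ time steps if the shape obtained after step $t_f$ is $S$. Spirals. For a path, a node is a turning point if it is an endpoint or its two path-neighbors form a right angle at it. A spiral is a path whose turning points, ordered from one endpoint to the other, turn always in the same rotational sense (always clockwise or always counterclockwise). An incompressible spiral with turning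 points $(tp_1,\dots,tp_k)$ from its internal endpoint $tp_1$ to its external endpoint $tp_k$ is a spiral whose segments $s_i$ (between $tp_i$ and $tp_{i+1}$, length $l(s_i)$ in edges) satisfy $l(s_1)=l(s_2)=1$ and $l(s_i)=l(s_{i-2})+1$ for $3\le i\le k-1$. *)

From Stdlib Require Import Bool ZArith List Reals.
Import ListNotations.
Open Scope Z_scope.

Definition Point := (Z * Z)%type.
Definition padd (p q : Point) : Point := (fst p + fst q, snd p + snd q).
Definition psub (p q : Point) : Point := (fst p - fst q, snd p - snd q).
Definition pscale (a : Z) (p : Point) : Point := (a * fst p, a * snd p).
Definition peqb (p q : Point) : bool := Z.eqb (fst p) (fst q) && Z.eqb (snd p) (snd q).
Definition adjacent (p q : Point) : Prop := Z.abs (fst p - fst q) + Z.abs (snd p - snd q) = 1.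
Definition dot (p q : Point) : Z := fst p * fst q + snd p * snd q.
Definition cross (p q : Point) : Z := fst p * snd q - snd p * fst q.

Inductive dir := East | West | North | South.
Definition dvec (d : dir) : Point :=
  match d with East => (1, 0) | West => (-1, 0) | North => (0, 1) | South => (0, -1) end.

(** Nodes are 0 .. sz-1; node 0 is the initial node, which is the anchor u0.
   Since edges are only created by growth operations, starting from one node the
   shape is always a tree; it is stored rooted at u0 via parent pointers
   ([par x] is the parent of [x <> 0]); the edges are the pairs {x, par x}, 0 < x < sz. *)
Record state := mkState { sz : nat; pos : nat -> Point; par : nat -> nat }.

Definition init_state : state := mkState 1 (fun _ => (0, 0)) (fun _ => 0%nat).

Fixpoint anc_list (pr : nat -> nat) (fuel w : nat) : list nat :=
  match fuel with
  | O => []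
  | S f => if Nat.eqb w 0 then [] else w :: anc_list pr f (pr w)
  end.

Section Step.
Variables (S : state) (d : dir) (o : nat -> bool).
(* [o u = true] : node u receives a growth operation towards pos u + dvec d *)

(** edge {x, par x} is subdivided by the operation of x (its parent lies at pos x + d) *)
Definition up_sub (x : nat) : bool :=
  o x && negb (Nat.eqb x 0) && peqb (pos S (par S x)) (padd (pos S x) (dvec d)).
(** edge {x, par x} is subdivided by the operation of par x (x lies at pos (par x) + d) *)
Definition down_sub (x : nat) : bool :=
  negb (Nat.eqb x 0) && o (par S x) && peqb (pos S x) (padd (pos S (par S x)) (dvec d)).
Definition sub_edge (x : nat) : bool := up_sub x || down_sub x.

(** displacement: sum over the subdivided edges on the path to u0 of the unit vector
    pointing from the endpoint closer to u0 to the farther one (the part hanging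
    from the farther endpoint is translated away from the other endpoint). *)
Definition disp (w : nat) : Point :=
  fold_right padd (0, 0)
    (map (fun x => if sub_edge x then psub (pos S x) (pos S (par S x)) else (0, 0))
         (anc_list (par S) (sz S) w)).

(** the new node created by the operation on u has index newidx u *)
Definition newidx (u : nat) : nat := (sz S + length (filter o (seq 0 u)))%nat.
Definition origin (i : nat) : nat :=
  match find (fun u => o u && Nat.eqb (newidx u) i) (seq 0 (sz S)) with
  | Some u => u | None => 0%nat end.

Definition step_sz : nat := (sz S + length (filter o (seq 0 (sz S))))%nat.

Definition step_pos (i : nat) : Point :=
  if Nat.ltb i (sz S) then padd (pos S i) (disp i)
  else let u := origin i in padd (padd (pos S u) (disp u)) (dvec d).

Definition step_par (i : nat) : nat :=
  if Nat.ltb i (sz S) then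
    (if up_sub i then newidx i
     else if down_sub i then newidx (par S i) else par S i)
  else let u := origin i in if up_sub u then par S u else u.

Definition step : state := mkState step_sz step_pos step_par.

(** collision-freeness: nodes move uniformly along straight lines from their old
    to their new positions during the unit time interval; no two (old) nodes may
    coincide at any time t in [0,1] (t = a/b rational suffices, the data being
    integral), and no two nodes (old or new) may end at the same point. *)
Definition collision_free : Prop :=
  (forall i j, (i < step_sz)%nat -> (j < step_sz)%nat -> i <> j ->
      step_pos i <> step_pos j) /\
  (forall i j, (i < sz S)%nat -> (j < sz S)%nat -> i <> j ->
     forall a b : Z, 0 <= a <= b -> 0 < b ->
       padd (pscale b (pos S i)) (pscale a (disp i)) <>
       padd (pscale b (pos S j)) (pscale a (disp j))).
End Step.

(** A growth process: a list of time steps, each a direction and a set of operated nodes. *)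
Definition gstep := (dir * (nat -> bool))%type.

Fixpoint valid_run (S : state) (steps : list gstep) : Prop :=
  match steps with
  | [] => True
  | (d, o) :: r => collision_free S d o /\ valid_run (step S d o) r
  end.

Fixpoint run (S : state) (steps : list gstep) : state :=
  match steps with
  | [] => S
  | (d, o) :: r => run (step S d o) r
  end.

(** * Paths and spirals. A path shape is given by the sequence of its node positions;
   its edges join consecutive nodes. *)
Definition pt (l : list Point) (i : nat) : Point := nth i l (0, 0).

Definition path_shape (l : list Point) : Prop :=
  NoDup l /\ forall i, (S i < length l)%nat -> adjacent (pt l i) (pt l (S i)).

Definition is_path_edge (l : list Point) (p q : Point) : Prop :=
  exists j, (S j < length l)%nat /\
    ((p = pt l j /\ q = pt l (S j)) \/ (q = pt l j /\ p = pt l (S j))).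

Definition turningb (l : list Point) (i : nat) : bool :=
  Nat.eqb i 0 || Nat.eqb i (length l - 1) ||
  Z.eqb (dot (psub (pt l i) (pt l (i - 1))) (psub (pt l (S i)) (pt l i))) 0.

Definition tps (l : list Point) : list nat := filter (turningb l) (seq 0 (length l)).

Definition turn_sign (l : list Point) (i : nat) : Z :=
  Z.sgn (cross (psub (pt l i) (pt l (i - 1))) (psub (pt l (S i)) (pt l i))).

Definition spiral (l : list Point) : Prop :=
  path_shape l /\
  exists s : Z, (s = 1 \/ s = -1) /\
    forall i, In i (tps l) -> (0 < i < length l - 1)%nat -> turn_sign l i = s.

(** length of segment s_i (1-based), between tp_i and tp_(i+1) *)
Definition seglen (l : list Point) (i : nat) : nat :=
  (nth i (tps l) 0 - nth (i - 1) (tps l) 0)%nat.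

(** [l] is an incompressible spiral listed from its internal endpoint tp_1 = pt l 0
    to its external endpoint tp_k. *)
Definition incompressible_spiral (l : list Point) : Prop :=
  spiral l /\
  let k := length (tps l) in
  (forall i, (1 <= i <= k - 1)%nat ->
     seglen l i = (if Nat.leb i 2 then 1%nat else S (seglen l (i - 2)))).

(** the state [S] is the path shape [l] up to translation, node 0 being at pt l 0 *)
Definition is_shape_from (S : state) (l : list Point) : Prop :=
  exists w : Point,
    sz S = length l /\
    padd (pos S 0) w = pt l 0 /\
    (forall i, (i < sz S)%nat -> In (padd (pos S i) w) l) /\
    (forall q, In q l -> exists i, (i < sz S)%nat /\ padd (pos S i) w = q) /\
    (forall i, (0 < i < sz S)%nat ->
        is_path_edge l (padd (pos S i) w) (padd (pos S (par S i)) w)) /\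
    (forall p q, is_path_edge l p q ->
        exists i, (0 < i < sz S)%nat /\
          ((p = padd (pos S i) w /\ q = padd (pos S (par S i)) w) \/
           (q = padd (pos S i) w /\ p = padd (pos S (par S i)) w))).

Definition grows_from_seed (steps : list gstep) (l : list Point) : Prop :=
  valid_run init_state steps /\ is_shape_from (run init_state steps) l.

(** Fix a valid growth run from a single node whose final state [F] is the spiral
   [l], with k turning points and segment lengths 1, 1, 2, 2, 3, 3, ...

   1. A time step only subdivides edges, so every edge of an intermediate state [G]
      is, in [F], a straight chain of nodes created later ([refines], [run_refines]).
   2. The nodes of [G] therefore occupy a set of "present" path indices, and the node
      at index j lies at the compressed path position: the sum of the path steps at
      the present indices up to j ([csum_pos]).
   3. Incompressibility: once an index beyond the i-th turning point is present,
      segment i is complete; otherwise the compressed path would place two nodes at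
      the same point ([spiral_inner_neighbour], [segment_complete]).
   4. The potential sum_i log2 (c_i + 1), where c_i counts the present indices of
      segment i, grows by at most 2 per step: each count at most doubles since new
      nodes hang from old ones, at most one segment is partially filled (by 3), and
      one segment holds the largest present index ([potential_step]).
   5. Finally the potential is sum_i log2 (l(s_i) + 1) >= (k/2) log2 (k/4), which
      yields k ln k / 8 <= #steps for k >= 3^8 ([real_bound]). *)

From Pilot Require Import Defs.
From Stdlib Require Import ZArith List Reals.
From Stdlib Require Import Bool Lia Lra Arith Classical.
Import ListNotations.
(* Re-import the definitions so that [pos] denotes node positions, not [Reals.pos]. *)
Import Defs.
Local Open Scope nat_scope.

Lemma point_ext (p q : Point) : fst p = fst q -> snd p = snd q -> p = q.
Proof. destruct p, q; simpl; intros -> ->; reflexivity. Qed.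

Definition rot (v : Point) : Point := (- snd v, fst v)%Z.
Definition pneg (v : Point) : Point := (- fst v, - snd v)%Z.
Definition rs (s : Z) (v : Point) : Point := if Z.eqb s 1 then rot v else pneg (rot v).

Ltac point_eq :=
  apply point_ext; unfold padd, psub, pscale, pneg in *; cbn [fst snd]; first [ring | lia].

Lemma peqb_eq p q : peqb p q = true -> p = q.
Proof.
  unfold peqb. intros H. apply andb_true_iff in H as [H1 H2].
  apply Z.eqb_eq in H1, H2. apply point_ext; auto.
Qed.

Lemma peqb_refl p : peqb p p = true.
Proof. unfold peqb. rewrite !Z.eqb_refl. reflexivity. Qed.

Lemma unit_cases a b : (Z.abs a + Z.abs b = 1)%Z ->
  (a = 1 /\ b = 0 \/ a = -1 /\ b = 0 \/ a = 0 /\ b = 1 \/ a = 0 /\ b = -1)%Z.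
Proof. lia. Qed.

Lemma turn_vec a1 a2 b1 b2 s : (Z.abs a1 + Z.abs a2 = 1)%Z -> (Z.abs b1 + Z.abs b2 = 1)%Z ->
  (a1 * b1 + a2 * b2 = 0)%Z -> Z.sgn (a1 * b2 - a2 * b1) = s -> (b1, b2) = rs s (a1, a2).
Proof.
  intros Ha Hb Hd Hs. apply unit_cases in Ha. apply unit_cases in Hb.
  destruct Ha as [[-> ->]|[[-> ->]|[[-> ->]|[-> ->]]]];
  destruct Hb as [[-> ->]|[[-> ->]|[[-> ->]|[-> ->]]]]; simpl in *; try lia; subst s; reflexivity.
Qed.

Lemma straight_vec a1 a2 b1 b2 : (Z.abs a1 + Z.abs a2 = 1)%Z -> (Z.abs b1 + Z.abs b2 = 1)%Z ->
  (a1 * b1 + a2 * b2 <> 0)%Z -> (b1, b2) = (a1, a2) \/ (b1, b2) = pneg (a1, a2).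
Proof.
  intros Ha Hb Hd. apply unit_cases in Ha. apply unit_cases in Hb.
  destruct Ha as [[-> ->]|[[-> ->]|[[-> ->]|[-> ->]]]];
  destruct Hb as [[-> ->]|[[-> ->]|[[-> ->]|[-> ->]]]]; simpl in *; try lia; auto.
Qed.

Lemma rs_rs s v : (s = 1 \/ s = -1)%Z -> rs s (rs s v) = pneg v.
Proof. intros [-> | ->]; unfold rs, rot, pneg; simpl; point_eq. Qed.

Lemma rs_neq s v : (s = 1 \/ s = -1)%Z -> (Z.abs (fst v) + Z.abs (snd v) = 1)%Z -> rs s v <> v.
Proof.
  intros [-> | ->] Hv E; destruct v as [a b]; unfold rs, rot, pneg in E; simpl in *;
    inversion E; lia.
Qed.

Lemma pneg_pneg v : pneg (pneg v) = v.
Proof. point_eq. Qed.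

Lemma exists_min (P : nat -> Prop) : (exists n, P n) -> exists n, P n /\ forall m, m < n -> ~ P m.
Proof.
  intros [n Hn]. induction n as [n IH] using lt_wf_ind.
  destruct (classic (exists m, m < n /\ P m)) as [[m [Hm Pm]]|Hno].
  - apply (IH m Hm Pm).
  - exists n; split; auto. intros m Hm Pm; apply Hno; eauto.
Qed.

Lemma nth_map_seq (f : nat -> nat) n i d : i < n -> nth i (map f (seq 0 n)) d = f i.
Proof.
  intros H. rewrite nth_indep with (d' := f 0) by (rewrite length_map, length_seq; lia).
  rewrite map_nth, seq_nth by lia. reflexivity.
Qed.

Record tree_inv (G : state) : Prop := {
  ti_nonempty : 0 < sz G;
  ti_root : par G 0 = 0;
  ti_par_lt : forall x, x < sz G -> par G x < sz G;
  ti_reach : forall x, x < sz G -> exists n, Nat.iter n (par G) x = 0;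
  ti_pos_inj : forall i j, i < sz G -> j < sz G -> pos G i = pos G j -> i = j }.
Arguments ti_nonempty {G}. Arguments ti_root {G}. Arguments ti_par_lt {G}.
Arguments ti_reach {G}. Arguments ti_pos_inj {G}.

Lemma init_tree_inv : tree_inv init_state.
Proof.
  split; simpl; try lia; auto.
  intros x Hx. exists 0. simpl. lia.
Qed.

Lemma iter_par_lt G n x : tree_inv G -> x < sz G -> Nat.iter n (par G) x < sz G.
Proof. intros HI Hx; induction n; simpl; auto. apply (ti_par_lt HI); auto. Qed.

(** The root is reached in fewer than [sz G] parent steps: the iterates before
    reaching it are distinct non-root nodes. *)
Lemma depth_bound G x : tree_inv G -> x < sz G ->
  exists n, n < sz G /\ Nat.iter n (par G) x = 0.
Proof.
  intros HI Hx. destruct (exists_min _ (ti_reach HI x Hx)) as [n [Hn Hmin]].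
  exists n; split; auto.
  set (L := map (fun j => Nat.iter j (par G) x) (seq 0 n)).
  assert (ND : NoDup L).
  { unfold L. apply NoDup_nth with (d := 0). rewrite length_map, length_seq.
    intros i j Hi Hj Heq. rewrite !nth_map_seq in Heq by lia.
    destruct (Nat.lt_total i j) as [Hij|[Hij|Hij]]; auto; exfalso.
    - apply (Hmin ((n - j) + i)); [lia|].
      rewrite Nat.iter_add, Heq, <- Nat.iter_add. replace (n - j + j) with n by lia. auto.
    - apply (Hmin ((n - i) + j)); [lia|].
      rewrite Nat.iter_add, <- Heq, <- Nat.iter_add. replace (n - i + i) with n by lia. auto. }
  assert (INC : incl L (seq 1 (sz G - 1))).
  { intros y Hy. unfold L in Hy. apply in_map_iff in Hy as [j [<- Hj]].
    apply in_seq in Hj. apply in_seq.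
    assert (Nat.iter j (par G) x <> 0) by (apply Hmin; lia).
    pose proof (iter_par_lt G j x HI Hx). lia. }
  pose proof (NoDup_incl_length ND INC) as Hlen.
  unfold L in Hlen. rewrite length_map, !length_seq in Hlen. lia.
Qed.

Lemma anc_fuel pr n : forall w f1 f2, Nat.iter n pr w = 0 -> n <= f1 -> n <= f2 ->
  anc_list pr f1 w = anc_list pr f2 w.
Proof.
  induction n; intros w f1 f2 H H1 H2.
  - simpl in H; subst. destruct f1, f2; reflexivity.
  - rewrite Nat.iter_succ_r in H. destruct f1 as [|f1]; [lia|]. destruct f2 as [|f2]; [lia|].
    simpl. destruct (Nat.eqb w 0); auto. f_equal. apply IHn; auto; lia.
Qed.

Definition contrib (G : state) (d : dir) (o : nat -> bool) (x : nat) : Point :=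
  if sub_edge G d o x then psub (pos G x) (pos G (par G x)) else (0%Z, 0%Z).

Lemma disp_rec G d o x : tree_inv G -> 0 < x < sz G ->
  disp G d o x = padd (contrib G d o x) (disp G d o (par G x)).
Proof.
  intros HI Hx. destruct (depth_bound G x HI ltac:(lia)) as [n [Hn Hit]].
  destruct n as [|n]; [simpl in Hit; lia|].
  unfold disp. remember (sz G) as s. destruct s as [|s]; [lia|].
  simpl. destruct (Nat.eqb_spec x 0); [lia|]. simpl.
  rewrite Nat.iter_succ_r in Hit.
  rewrite (anc_fuel (par G) n (par G x) s (S s)) by (auto; lia). reflexivity.
Qed.

Definition cnt (o : nat -> bool) u := length (filter o (seq 0 u)).

Lemma cnt_S o u : cnt o (S u) = cnt o u + (if o u then 1 else 0).
Proof. unfold cnt. rewrite seq_S, filter_app, length_app. simpl. destruct (o u); simpl; lia. Qed.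

Lemma cnt_mono o u v : u <= v -> cnt o u <= cnt o v.
Proof. induction 1; auto. rewrite cnt_S. lia. Qed.

Lemma cnt_strict o u v : u < v -> o u = true -> cnt o u < cnt o v.
Proof. intros H Ho. pose proof (cnt_mono o (S u) v H) as Hm. rewrite cnt_S, Ho in Hm. lia. Qed.

Lemma cnt_ivt o s v : v < cnt o s -> exists u, u < s /\ o u = true /\ cnt o u = v.
Proof.
  induction s; intros H; [unfold cnt in H; simpl in H; lia|].
  rewrite cnt_S in H. destruct (Nat.lt_ge_cases v (cnt o s)) as [Hl|Hl].
  - destruct (IHs Hl) as [u [? [? ?]]]. exists u; repeat split; auto; lia.
  - destruct (o s) eqn:E; [|lia]. exists s; repeat split; auto; lia.
Qed.

Section FreshIndices.
Variables (G : state) (o : nat -> bool).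

Lemma newidx_inj u v : o u = true -> o v = true -> newidx G o u = newidx G o v -> u = v.
Proof.
  unfold newidx; fold (cnt o u) (cnt o v). intros Hu Hv H.
  destruct (Nat.lt_total u v) as [h|[h|h]]; auto.
  - pose proof (cnt_strict o u v h Hu); lia.
  - pose proof (cnt_strict o v u h Hv); lia.
Qed.

Lemma newidx_range u : u < sz G -> o u = true -> sz G <= newidx G o u < step_sz G o.
Proof.
  intros Hu Ho. unfold newidx, step_sz; fold (cnt o u) (cnt o (sz G)).
  pose proof (cnt_strict o u (sz G) Hu Ho). lia.
Qed.

Lemma origin_newidx u : u < sz G -> o u = true -> origin G o (newidx G o u) = u.
Proof.
  intros Hu Ho. unfold origin.
  destruct (find _ _) as [v|] eqn:E.
  - apply find_some in E as [_ Hv]. apply andb_true_iff in Hv as [Hv1 Hv2].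
    apply Nat.eqb_eq in Hv2. apply newidx_inj; auto.
  - exfalso. pose proof (find_none _ _ E u) as C. rewrite in_seq in C.
    specialize (C ltac:(lia)). rewrite Ho, Nat.eqb_refl in C. discriminate.
Qed.

Lemma origin_spec i : sz G <= i < step_sz G o ->
  origin G o i < sz G /\ o (origin G o i) = true /\ newidx G o (origin G o i) = i.
Proof.
  unfold step_sz; fold (cnt o (sz G)). intros Hi.
  destruct (cnt_ivt o (sz G) (i - sz G) ltac:(lia)) as [u [Hu [Ho Hc]]].
  assert (newidx G o u = i) by (unfold newidx; fold (cnt o u); lia). subst i.
  rewrite origin_newidx; auto.
Qed.
End FreshIndices.

Definition evec (G : state) x := psub (pos G x) (pos G (par G x)).

Section StepFacts.
Variables (G : state) (d : dir) (o : nat -> bool).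
Let G' := step G d o.

Lemma sz_step_ge : sz G <= sz G'.
Proof. unfold G'; simpl; unfold step_sz. lia. Qed.

Lemma pos_old i : i < sz G -> pos G' i = padd (pos G i) (disp G d o i).
Proof. intros H. unfold G'; simpl. unfold step_pos. apply Nat.ltb_lt in H. rewrite H; auto. Qed.

Lemma pos_new i : sz G <= i ->
  pos G' i = padd (padd (pos G (origin G o i)) (disp G d o (origin G o i))) (dvec d).
Proof. intros H. unfold G'; simpl. unfold step_pos. destruct (Nat.ltb_spec i (sz G)); [lia|auto]. Qed.

Lemma par_old i : i < sz G -> par G' i =
  (if up_sub G d o i then newidx G o i
   else if down_sub G d o i then newidx G o (par G i) else par G i).
Proof. intros H. unfold G'; simpl. unfold step_par. apply Nat.ltb_lt in H. rewrite H; auto. Qed.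

Lemma par_new i : sz G <= i ->
  par G' i = (if up_sub G d o (origin G o i) then par G (origin G o i) else origin G o i).
Proof. intros H. unfold G'; simpl. unfold step_par. destruct (Nat.ltb_spec i (sz G)); [lia|auto]. Qed.

Lemma up_sub_spec x : up_sub G d o x = true ->
  o x = true /\ x <> 0 /\ pos G (par G x) = padd (pos G x) (dvec d).
Proof.
  unfold up_sub. intros H. apply andb_true_iff in H as [H H3]. apply andb_true_iff in H as [H1 H2].
  apply negb_true_iff, Nat.eqb_neq in H2. apply peqb_eq in H3. auto.
Qed.

Lemma down_sub_spec x : down_sub G d o x = true ->
  x <> 0 /\ o (par G x) = true /\ pos G x = padd (pos G (par G x)) (dvec d).
Proof.
  unfold down_sub. intros H. apply andb_true_iff in H as [H H3]. apply andb_true_iff in H as [H1 H2].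
  apply negb_true_iff, Nat.eqb_neq in H1. apply peqb_eq in H3. auto.
Qed.

Lemma new_par_old i : tree_inv G -> sz G <= i < sz G' -> par G' i < sz G.
Proof.
  intros HI Hi. rewrite par_new by lia.
  destruct (origin_spec G o i Hi) as [Hu _].
  destruct up_sub; auto. apply (ti_par_lt HI); auto.
Qed.

(** An edge cannot be subdivided from both of its endpoints: otherwise [x] and its
    grandparent would share a position, making [x] its own grandparent. *)
Lemma no_up_down x : tree_inv G -> 0 < x < sz G ->
  down_sub G d o x = true -> up_sub G d o (par G x) = false.
Proof.
  intros HI Hx Hd. destruct (up_sub G d o (par G x)) eqn:Hu; auto. exfalso.
  apply down_sub_spec in Hd as (_ & _ & Hd). apply up_sub_spec in Hu as (_ & _ & Hu).
  assert (E : par G (par G x) = x).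
  { apply (ti_pos_inj HI); [apply (ti_par_lt HI), (ti_par_lt HI); lia | lia |].
    rewrite Hu, Hd; reflexivity. }
  destruct (ti_reach HI x ltac:(lia)) as [n Hn].
  assert (Hcyc : forall m, Nat.iter m (par G) x = x \/ Nat.iter m (par G) x = par G x).
  { induction m; simpl; auto. destruct IHm as [-> | ->]; auto. }
  destruct (Hcyc n) as [h|h]; rewrite h in Hn; [lia|].
  rewrite Hn, (ti_root HI) in E. lia.
Qed.

Lemma subdivided_edge x : tree_inv G -> 0 < x < sz G -> sub_edge G d o x = true ->
  exists n, sz G <= n < sz G' /\ par G' x = n /\ par G' n = par G x /\
    evec G' x = evec G x /\ evec G' n = evec G x.
Proof.
  intros HI Hx Hsub.
  pose proof (disp_rec G d o x HI Hx) as Hdx.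
  assert (Hp : par G x < sz G) by (apply (ti_par_lt HI); lia).
  assert (Hc : contrib G d o x = psub (pos G x) (pos G (par G x)))
    by (unfold contrib; rewrite Hsub; reflexivity).
  assert (Hpp : pos G' (par G x) = padd (pos G (par G x)) (disp G d o (par G x)))
    by (apply pos_old; auto).
  assert (Hpx : pos G' x = padd (pos G x) (disp G d o x)) by (apply pos_old; lia).
  unfold sub_edge in Hsub.
  destruct (up_sub G d o x) eqn:Hu; simpl in Hsub.
  - destruct (up_sub_spec x Hu) as [Ho [_ Hpos]].
    set (n := newidx G o x). exists n.
    pose proof (newidx_range G o x ltac:(lia) Ho) as Hn; fold n in Hn.
    assert (Hpn : pos G' n = padd (padd (pos G x) (disp G d o x)) (dvec d))
      by (unfold n; rewrite pos_new, origin_newidx by (auto; lia); auto).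
    assert (Hpar_n : par G' n = par G x)
      by (unfold n; rewrite par_new, origin_newidx, Hu by (auto; lia); auto).
    repeat split; try (unfold G'; simpl; lia); auto.
    + rewrite par_old, Hu by lia; auto.
    + unfold evec. rewrite par_old, Hu by lia. fold n. rewrite Hpx, Hpn, Hpos. point_eq.
    + unfold evec. rewrite Hpar_n, Hpn, Hpp, Hdx, Hc, Hpos. point_eq.
  - destruct (down_sub_spec x Hsub) as [_ [Ho Hpos]].
    set (n := newidx G o (par G x)). exists n.
    pose proof (newidx_range G o (par G x) Hp Ho) as Hn; fold n in Hn.
    assert (Hpn : pos G' n = padd (padd (pos G (par G x)) (disp G d o (par G x))) (dvec d))
      by (unfold n; rewrite pos_new, origin_newidx by (auto; lia); auto).
    assert (Hpar_n : par G' n = par G x)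
      by (unfold n; rewrite par_new, origin_newidx, (no_up_down x HI Hx Hsub) by (auto; lia); auto).
    repeat split; try (unfold G'; simpl; lia); auto.
    + rewrite par_old, Hu, Hsub by lia; auto.
    + unfold evec. rewrite par_old, Hu, Hsub by lia. fold n.
      rewrite Hpx, Hpn, Hdx, Hc, Hpos. point_eq.
    + unfold evec. rewrite Hpar_n, Hpn, Hpp, Hpos. point_eq.
Qed.

Lemma kept_edge x : tree_inv G -> 0 < x < sz G -> sub_edge G d o x = false ->
  par G' x = par G x /\ evec G' x = evec G x.
Proof.
  intros HI Hx Hsub. pose proof (disp_rec G d o x HI Hx) as Hdx.
  assert (Hp : par G x < sz G) by (apply (ti_par_lt HI); lia).
  assert (Hc : contrib G d o x = (0%Z, 0%Z)) by (unfold contrib; rewrite Hsub; reflexivity).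
  unfold sub_edge in Hsub. apply orb_false_iff in Hsub as [Hu Hd].
  assert (Hpx : par G' x = par G x) by (rewrite par_old, Hu, Hd by lia; auto).
  split; auto. unfold evec. rewrite Hpx, !pos_old, Hdx, Hc by lia. point_eq.
Qed.

Lemma par_old_chain x : tree_inv G -> 0 < x < sz G -> exists m, Nat.iter m (par G') x = par G x.
Proof.
  intros HI Hx. destruct (sub_edge G d o x) eqn:Hs.
  - destruct (subdivided_edge x HI Hx Hs) as [n [_ [Hpx [Hpn _]]]].
    exists 2. change (par G' (par G' x) = par G x). rewrite Hpx; auto.
  - exists 1. apply (kept_edge x HI Hx Hs).
Qed.

Lemma par_step_lt x : tree_inv G -> x < sz G' -> par G' x < sz G'.
Proof.
  intros HI Hx. pose proof sz_step_ge. destruct (Nat.lt_ge_cases x (sz G)) as [h|h].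
  - rewrite par_old by auto. destruct (up_sub G d o x) eqn:Hu.
    + apply up_sub_spec in Hu as [Ho _]. apply newidx_range; auto.
    + destruct (down_sub G d o x) eqn:Hd.
      * apply down_sub_spec in Hd as [_ [Ho _]]. apply newidx_range; auto.
        apply (ti_par_lt HI); auto.
      * pose proof (ti_par_lt HI x h). lia.
  - pose proof (new_par_old x HI ltac:(lia)). lia.
Qed.

Lemma step_tree_inv : tree_inv G -> collision_free G d o -> tree_inv G'.
Proof.
  intros HI [Hcf _]. pose proof sz_step_ge as Hge.
  assert (Hold : forall x, x < sz G -> exists n, Nat.iter n (par G') x = 0).
  { intros x Hx. destruct (ti_reach HI x Hx) as [n Hn]. revert x Hx Hn.
    induction n; intros x Hx Hn; [exists 0; auto|].
    rewrite Nat.iter_succ_r in Hn. destruct (Nat.eq_dec x 0) as [->|hx]; [exists 0; auto|].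
    destruct (IHn (par G x) (ti_par_lt HI x Hx) Hn) as [n' Hn'].
    destruct (par_old_chain x HI ltac:(lia)) as [m Hm].
    exists (n' + m). rewrite Nat.iter_add, Hm. auto. }
  split.
  - pose proof (ti_nonempty HI). lia.
  - rewrite par_old by (apply (ti_nonempty HI)). unfold up_sub, down_sub. simpl.
    rewrite !andb_false_r. apply (ti_root HI).
  - intros; apply par_step_lt; auto.
  - intros x Hx. destruct (Nat.lt_ge_cases x (sz G)) as [h|h]; auto.
    destruct (Hold (par G' x) (new_par_old x HI ltac:(lia))) as [n Hn].
    exists (n + 1). rewrite Nat.iter_add. simpl. auto.
  - intros i j Hi Hj Heq. destruct (Nat.eq_dec i j); auto. exfalso. apply (Hcf i j); auto.
Qed.
End StepFacts.

(** ** Refinement: the edges of an earlier shape are straight chains in a later one *)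
Definition refines (G F : state) : Prop :=
  sz G <= sz F /\
  forall x, 0 < x < sz G -> exists m, 0 < m /\
     Nat.iter m (par F) x = par G x /\
     (forall j, 0 < j < m -> sz G <= Nat.iter j (par F) x) /\
     (forall j, j < m -> evec F (Nat.iter j (par F) x) = evec G x).

Lemma refines_refl G : refines G G.
Proof.
  split; auto. intros x Hx. exists 1. repeat split; intros; try lia.
  replace j with 0 by lia. reflexivity.
Qed.

Lemma refines_step G d o : tree_inv G -> refines G (step G d o).
Proof.
  intros HI. set (G' := step G d o). split; [apply sz_step_ge|]. intros x Hx.
  destruct (sub_edge G d o x) eqn:Hs.
  - destruct (subdivided_edge G d o x HI Hx Hs) as [n [Hn [Hpx [Hpn [Hex Hen]]]]].
    fold G' in Hn, Hpx, Hpn, Hex, Hen.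
    exists 2. split; [lia|]. split; [change (par G' (par G' x) = par G x); rewrite Hpx; auto|].
    split.
    + intros j Hj. replace j with 1 by lia. change (sz G <= par G' x). rewrite Hpx. lia.
    + intros j Hj. destruct j as [|[|]]; [auto| |lia].
      change (evec G' (par G' x) = evec G x). rewrite Hpx; auto.
  - destruct (kept_edge G d o x HI Hx Hs) as [Hpx Hex].
    exists 1. repeat split; auto; intros j Hj; [lia|]. replace j with 0 by lia. auto.
Qed.

Lemma refines_chain (G2 G3 : state) (s1 : nat) (e : Point) :
  refines G2 G3 -> s1 <= sz G2 ->
  forall m x, (forall j, j < m -> 0 < Nat.iter j (par G2) x < sz G2) ->
    (forall j, 0 < j < m -> s1 <= Nat.iter j (par G2) x) ->
    (forall j, j < m -> evec G2 (Nat.iter j (par G2) x) = e) ->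
    exists M, (m = 0 -> M = 0) /\ (0 < m -> 0 < M) /\
      Nat.iter M (par G3) x = Nat.iter m (par G2) x /\
      (forall J, 0 < J < M -> s1 <= Nat.iter J (par G3) x) /\
      (forall J, J < M -> evec G3 (Nat.iter J (par G3) x) = e).
Proof.
  intros [Hsz23 R23] Hs1. induction m; intros x H1 H2 H3.
  - exists 0. repeat split; intros; try lia.
  - destruct (R23 x (H1 0 ltac:(lia))) as [M0 [HM0 [Hit0 [Hint0 Hev0]]]].
    destruct (IHm (par G2 x)) as [M' [HM'0 [HM'p [Hit' [Hint' Hev']]]]].
    + intros j Hj. rewrite <- Nat.iter_succ_r. apply H1; lia.
    + intros j Hj. rewrite <- Nat.iter_succ_r. apply H2; lia.
    + intros j Hj. rewrite <- Nat.iter_succ_r. apply H3; lia.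
    + exists (M' + M0). repeat split; try lia.
      * rewrite Nat.iter_add, Hit0, Hit', Nat.iter_succ_r. auto.
      * intros J HJ. destruct (Nat.lt_total J M0) as [h|[h|h]].
        -- specialize (Hint0 J ltac:(lia)). lia.
        -- subst J. rewrite Hit0. destruct m.
           ++ rewrite HM'0 in HJ by auto. lia.
           ++ specialize (H2 1 ltac:(lia)). simpl in H2. auto.
        -- replace J with ((J - M0) + M0) by lia. rewrite Nat.iter_add, Hit0. apply Hint'. lia.
      * intros J HJ. destruct (Nat.lt_ge_cases J M0) as [h|h].
        -- rewrite Hev0 by auto. apply (H3 0). lia.
        -- replace J with ((J - M0) + M0) by lia. rewrite Nat.iter_add, Hit0. apply Hev'. lia.
Qed.

Lemma refines_trans G1 G2 G3 : tree_inv G2 -> refines G1 G2 -> refines G2 G3 -> refines G1 G3.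
Proof.
  intros HI2 [H12 R12] R23. pose proof R23 as [H23 _]. split; [lia|].
  intros x Hx. destruct (R12 x Hx) as [m [Hm [Hit [Hint Hev]]]].
  destruct (refines_chain G2 G3 (sz G1) (evec G1 x) R23 H12 m x) as [M [_ [HM [HitM [HintM HevM]]]]];
    auto.
  - intros j Hj. split.
    + destruct j; [simpl; lia|]. specialize (Hint (S j) ltac:(lia)). lia.
    + apply iter_par_lt; auto; lia.
  - exists M. repeat split; auto. rewrite HitM; auto.
Qed.

Lemma run_refines G steps : tree_inv G -> valid_run G steps ->
  tree_inv (run G steps) /\ refines G (run G steps).
Proof.
  revert G; induction steps as [|[d o] r IH]; intros G HI Hv.
  - split; auto. apply refines_refl.
  - destruct Hv as [Hcf Hv].
    pose proof (step_tree_inv G d o HI Hcf) as HI'.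
    destruct (IH _ HI' Hv) as [HIF HRF]. split; auto.
    apply refines_trans with (step G d o); auto. apply refines_step; auto.
Qed.

Fixpoint lsum (g : nat -> nat) (L : list nat) : nat :=
  match L with [] => 0 | a :: r => g a + lsum g r end.

Lemma lsum_ext g h L : (forall i, In i L -> g i = h i) -> lsum g L = lsum h L.
Proof.
  induction L as [|a L IHL]; simpl; intros H; [reflexivity|].
  rewrite (H a (or_introl eq_refl)). f_equal. apply IHL. intros; apply H; right; auto.
Qed.

Lemma lsum_app g A B : lsum g (A ++ B) = lsum g A + lsum g B.
Proof. induction A; simpl; auto. rewrite IHA. lia. Qed.

Lemma lsum_le g h a b L : (forall i, In i L -> g i <= h i + a i + b i) ->
  lsum g L <= lsum h L + lsum a L + lsum b L.
Proof.
  induction L; simpl; intros H; auto. pose proof (H a0 (or_introl eq_refl)).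
  pose proof (IHL (fun i Hi => H i (or_intror Hi))). lia.
Qed.

Lemma lsum_ge_const g c L : (forall i, In i L -> c <= g i) -> length L * c <= lsum g L.
Proof.
  induction L; simpl; intros H; auto. pose proof (H a (or_introl eq_refl)).
  pose proof (IHL (fun i Hi => H i (or_intror Hi))). lia.
Qed.

Lemma lsum_01 a L : NoDup L -> (forall i, In i L -> a i <= 1) ->
  (forall i j, In i L -> In j L -> a i = 1 -> a j = 1 -> i = j) -> lsum a L <= 1.
Proof.
  induction L as [|x r IH]; simpl; intros ND H1 H2; [lia|]. inversion ND; subst.
  destruct (Nat.eq_dec (a x) 0) as [E|E]; [rewrite E; apply IH; auto|].
  assert (Hr : forall i, In i r -> a i = 0).
  { intros i Hi. pose proof (H1 i (or_intror Hi)). pose proof (H1 x (or_introl eq_refl)).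
    destruct (Nat.eq_dec (a i) 0); auto. exfalso.
    assert (i = x) by (apply H2; auto; lia). subst; auto. }
  rewrite (lsum_ext a (fun _ => 0) r Hr). specialize (H1 x (or_introl eq_refl)).
  assert (Hzero : lsum (fun _ => 0) r = 0) by (clear; induction r; simpl; auto). lia.
Qed.

Lemma filter_split (p p' : nat -> bool) L : (forall x, p x = true -> p' x = true) ->
  length (filter p' L) = length (filter p L) + length (filter (fun x => p' x && negb (p x)) L).
Proof.
  intros H. induction L; simpl; auto. destruct (p a) eqn:E1.
  - rewrite (H a E1). simpl. lia.
  - destruct (p' a); simpl; lia.
Qed.

Lemma filter_none (p : nat -> bool) L : (forall x, In x L -> p x = false) -> filter p L = [].
Proof. induction L; simpl; intros H; auto. rewrite H by auto. apply IHL; auto. Qed.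

Lemma filter_all (p : nat -> bool) L : (forall x, In x L -> p x = true) -> filter p L = L.
Proof. induction L; simpl; intros H; auto. rewrite H by auto. f_equal. apply IHL; auto. Qed.

Lemma filt_in (p : nat -> bool) a n j : In j (filter p (seq a n)) <-> a <= j < a + n /\ p j = true.
Proof. rewrite filter_In, in_seq. tauto. Qed.

Lemma filt_lt (p : nat -> bool) n : forall a i j, i < j < length (filter p (seq a n)) ->
  nth i (filter p (seq a n)) 0 < nth j (filter p (seq a n)) 0.
Proof.
  induction n; intros a i j H; simpl in *; [lia|].
  destruct (p a) eqn:E; [|apply IHn; auto].
  simpl in H. destruct i, j; simpl; try lia; [|apply IHn; lia].
  assert (Hin : In (nth j (filter p (seq (S a) n)) 0) (filter p (seq (S a) n)))
    by (apply nth_In; lia).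
  apply filt_in in Hin. lia.
Qed.

Lemma filt_lt_iff (p : nat -> bool) a n i j :
  i < length (filter p (seq a n)) -> j < length (filter p (seq a n)) ->
  (nth i (filter p (seq a n)) 0 < nth j (filter p (seq a n)) 0 <-> i < j).
Proof.
  intros Hi Hj. split; intros H; [|apply filt_lt; lia].
  destruct (Nat.lt_total i j) as [h|[h|h]]; auto; [subst; lia|].
  pose proof (filt_lt p n a j i ltac:(lia)). lia.
Qed.

Fixpoint idxof (p : Point) (l : list Point) : nat :=
  match l with [] => 0 | q :: r => if peqb q p then 0 else S (idxof p r) end.

Lemma idxof_spec p l : In p l -> idxof p l < length l /\ nth (idxof p l) l (0%Z,0%Z) = p.
Proof.
  induction l as [|q r IH]; simpl; [tauto|]. intros H.
  destruct (peqb q p) eqn:E.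
  - apply peqb_eq in E; subst; split; auto; lia.
  - assert (q <> p) by (intros <-; rewrite peqb_refl in E; discriminate).
    destruct H as [H|H]; [congruence|]. destruct (IH H); split; auto; lia.
Qed.

Lemma idxof_nth l j : NoDup l -> j < length l -> idxof (nth j l (0%Z,0%Z)) l = j.
Proof.
  intros ND Hj. set (p := nth j l _).
  destruct (idxof_spec p l (nth_In _ _ Hj)) as [H1 H2].
  apply (proj1 (NoDup_nth l (0%Z,0%Z)) ND); auto.
Qed.

(** ** Geometry of an incompressible spiral

   We number the turning points from 0: [tp i] is the path index of tp_(i+1), so
   segment [i] (for 1 <= i <= K-1) joins [tp (i-1)] to [tp i], has length
   [seglen l i] and unit direction [segdir i]. *)

Definition dirv (l : list Point) (j : nat) : Point := psub (pt l j) (pt l (j - 1)).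

Section Spiral.
Variable l : list Point.
Hypothesis Hinc : incompressible_spiral l.
Hypothesis HK2 : 2 <= length (tps l).

Local Notation N := (length l).
Local Notation K := (length (tps l)).
Local Notation len := (seglen l).

Lemma spiral_path : path_shape l.
Proof. apply Hinc. Qed.

Definition tp i := nth i (tps l) 0.
Definition segdir i := dirv l (tp i).

Lemma tp_lt_iff i j : i < K -> j < K -> (tp i < tp j <-> i < j).
Proof. intros. apply filt_lt_iff; auto. Qed.

Lemma tp_mono i j : i <= j < K -> tp i <= tp j.
Proof.
  intros H. destruct (Nat.eq_dec i j) as [->|h]; auto.
  pose proof (proj2 (tp_lt_iff i j ltac:(lia) ltac:(lia)) ltac:(lia)). lia.
Qed.

Lemma tp_in i : i < K -> tp i < N /\ turningb l (tp i) = true.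
Proof.
  intros H. assert (Hin : In (tp i) (tps l)) by (apply nth_In; auto).
  apply filt_in in Hin. split; [lia|tauto].
Qed.

Lemma turning_tp j : j < N -> turningb l j = true -> exists i, i < K /\ tp i = j.
Proof.
  intros H1 H2. assert (Hin : In j (tps l)) by (apply filt_in; split; [lia|auto]).
  apply In_nth with (d := 0) in Hin as [i [Hi Hi2]]. exists i; auto.
Qed.

Lemma N_pos : 0 < N.
Proof. destruct (tp_in 0 ltac:(lia)). lia. Qed.

Lemma tp_first : tp 0 = 0.
Proof.
  destruct (turning_tp 0 N_pos) as [i [Hi Hi2]]; [reflexivity|].
  destruct i; auto. pose proof (proj2 (tp_lt_iff 0 (S i) ltac:(lia) Hi) ltac:(lia)). lia.
Qed.

Lemma tp_last : tp (K - 1) = N - 1.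
Proof.
  destruct (turning_tp (N-1)) as [i [Hi Hi2]]; [pose proof N_pos; lia| |].
  { unfold turningb. rewrite Nat.eqb_refl, orb_true_r. reflexivity. }
  destruct (Nat.eq_dec i (K-1)) as [->|h]; auto.
  pose proof (proj2 (tp_lt_iff i (K-1) Hi ltac:(lia)) ltac:(lia)).
  pose proof (tp_in (K-1) ltac:(lia)). lia.
Qed.

Lemma tp_pos i : 1 <= i < K -> 0 < tp i.
Proof.
  intros. pose proof (proj2 (tp_lt_iff 0 i ltac:(lia) ltac:(lia)) ltac:(lia)).
  rewrite tp_first in *. lia.
Qed.

Lemma len_pos i : 1 <= i < K -> 0 < len i.
Proof.
  intros. pose proof (proj2 (tp_lt_iff (i-1) i ltac:(lia) ltac:(lia)) ltac:(lia)).
  unfold seglen. fold (tp i) (tp (i-1)). lia.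
Qed.

Lemma len_tp i : len i = tp i - tp (i - 1).
Proof. reflexivity. Qed.

Lemma not_turning_inside i j : i + 1 < K -> tp i < j < tp (i + 1) -> turningb l j = false.
Proof.
  intros Hi Hj. destruct (turningb l j) eqn:E; auto. exfalso.
  pose proof (tp_in (i+1) Hi) as [h _].
  destruct (turning_tp j ltac:(lia) E) as [m [Hm <-]].
  destruct Hj as [Hj1 Hj2].
  apply (tp_lt_iff i m) in Hj1; try lia. apply (tp_lt_iff m (i+1)) in Hj2; lia.
Qed.

Lemma seg_cover j : 0 < j < N -> exists i, 1 <= i <= K - 1 /\ tp (i - 1) < j <= tp i.
Proof.
  intros Hj. destruct (exists_min (fun i => i < K /\ j <= tp i)) as [i [[Hi1 Hi2] Hmin]].
  - exists (K-1). rewrite tp_last. lia.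
  - exists i. destruct i; [rewrite tp_first in Hi2; lia|].
    split; [lia|]. split; auto. destruct (Nat.lt_ge_cases (tp (S i - 1)) j) as [h|h]; auto.
    exfalso. apply (Hmin i); [lia|]. split; [lia|]. replace i with (S i - 1) by lia. auto.
Qed.

Lemma dir_S j : dirv l (S j) = psub (pt l (S j)) (pt l j).
Proof. unfold dirv. f_equal. f_equal. lia. Qed.

Lemma pt_dir j : 0 < j -> pt l j = padd (pt l (j - 1)) (dirv l j).
Proof. intros. unfold dirv. point_eq. Qed.

Lemma pt_inj a b : a < N -> b < N -> pt l a = pt l b -> a = b.
Proof. intros. apply (proj1 (NoDup_nth l (0%Z,0%Z)) (proj1 spiral_path)); auto. Qed.

Lemma dir_unit j : 1 <= j <= N - 1 -> (Z.abs (fst (dirv l j)) + Z.abs (snd (dirv l j)) = 1)%Z.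
Proof.
  intros Hj. pose proof (proj2 spiral_path (j - 1) ltac:(lia)) as Ha.
  unfold adjacent in Ha. replace (S (j - 1)) with j in Ha by lia.
  unfold dirv, psub. cbn [fst snd]. lia.
Qed.

(** At a non-turning inner index the path goes straight on (it cannot go back, the
    path having no repeated point). *)
Lemma dir_straight j : 0 < j < N - 1 -> turningb l j = false -> dirv l (S j) = dirv l j.
Proof.
  intros Hj Ht. unfold turningb in Ht. apply orb_false_iff in Ht as [_ Ht].
  apply Z.eqb_neq in Ht. fold (dirv l j) in Ht. rewrite <- dir_S in Ht.
  pose proof (dir_unit j ltac:(lia)) as U1. pose proof (dir_unit (S j) ltac:(lia)) as U2.
  destruct (dirv l j) as [a1 a2] eqn:E1, (dirv l (S j)) as [b1 b2] eqn:E2.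
  unfold dot in Ht; simpl in *. destruct (straight_vec a1 a2 b1 b2 U1 U2 Ht) as [h|h]; auto.
  exfalso. rewrite dir_S in E2. unfold dirv in E1. unfold pneg in h. simpl in h. inversion h; subst.
  assert (Hback : pt l (S j) = pt l (j - 1)).
  { pose proof (f_equal fst E1); pose proof (f_equal snd E1).
    pose proof (f_equal fst E2); pose proof (f_equal snd E2).
    apply point_ext; unfold psub in *; cbn [fst snd] in *; lia. }
  apply pt_inj in Hback; lia.
Qed.

Lemma turn_dir : exists s, (s = 1 \/ s = -1)%Z /\
  forall j, 0 < j < N - 1 -> turningb l j = true -> dirv l (S j) = rs s (dirv l j).
Proof.
  destruct Hinc as [[_ [s [Hs Hts]]] _]. exists s. split; auto.
  intros j Hj Ht. specialize (Hts j). unfold turn_sign in Hts.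
  assert (Hin : In j (tps l)) by (apply filt_in; split; [lia|auto]).
  specialize (Hts Hin ltac:(lia)).
  unfold turningb in Ht. rewrite (proj2 (Nat.eqb_neq j 0)) in Ht by lia.
  rewrite (proj2 (Nat.eqb_neq j (N - 1))) in Ht by lia. simpl in Ht.
  apply Z.eqb_eq in Ht. fold (dirv l j) in Ht, Hts. rewrite <- dir_S in Ht, Hts.
  pose proof (dir_unit j ltac:(lia)) as U1. pose proof (dir_unit (S j) ltac:(lia)) as U2.
  destruct (dirv l j) as [a1 a2], (dirv l (S j)) as [b1 b2].
  unfold dot, cross in *; simpl in *. apply turn_vec; auto.
Qed.

Lemma seg_dir i j : 1 <= i <= K - 1 -> tp (i - 1) < j <= tp i -> dirv l j = segdir i.
Proof.
  intros Hi Hj. unfold segdir. remember (tp i - j) as r eqn:Er. revert j Hj Er.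
  induction r; intros j Hj Er; [f_equal; lia|].
  rewrite <- (IHr (S j)) by lia. symmetry. apply dir_straight.
  - pose proof (tp_in i ltac:(lia)). pose proof (tp_mono i (K-1) ltac:(lia)). rewrite tp_last in *. lia.
  - apply (not_turning_inside (i - 1)); [lia|]. replace (i - 1 + 1) with i by lia. lia.
Qed.

Lemma pt_seg i r : 1 <= i <= K - 1 -> r <= len i ->
  pt l (tp (i - 1) + r) = padd (pt l (tp (i - 1))) (pscale (Z.of_nat r) (segdir i)).
Proof.
  intros Hi. rewrite len_tp. induction r; intros Hr.
  - rewrite Nat.add_0_r. point_eq.
  - rewrite pt_dir by lia. replace (tp (i - 1) + S r - 1) with (tp (i-1) + r) by lia.
    rewrite IHr, (seg_dir i (tp (i - 1) + S r)) by lia.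
    rewrite Nat2Z.inj_succ. point_eq.
Qed.

Lemma pt_tp j : S j <= K - 1 ->
  pt l (tp (S j)) = padd (pt l (tp j)) (pscale (Z.of_nat (len (S j))) (segdir (S j))).
Proof.
  intros Hj. pose proof (pt_seg (S j) (len (S j)) ltac:(lia) (le_n _)) as H.
  replace (S j - 1) with j in H by lia. rewrite <- H. f_equal.
  pose proof (tp_mono j (S j) ltac:(lia)). rewrite len_tp. replace (S j - 1) with j by lia. lia.
Qed.

Lemma len_rec i : 1 <= i <= K - 1 -> len i = (if Nat.leb i 2 then 1 else S (len (i - 2))).
Proof. intros H. apply (proj2 Hinc). lia. Qed.

Lemma len_succ2 j : 1 <= j -> j + 2 <= K - 1 -> len (j + 2) = S (len j).
Proof. intros. rewrite len_rec by lia. destruct (Nat.leb_spec (j + 2) 2); [lia|]. do 2 f_equal. lia. Qed.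

Lemma len_lb i : 1 <= i <= K - 1 -> i <= 2 * len i.
Proof.
  induction i as [i IH] using lt_wf_ind. intros Hi. rewrite len_rec by lia.
  destruct (Nat.leb_spec i 2); [lia|]. specialize (IH (i - 2) ltac:(lia) ltac:(lia)). lia.
Qed.

Lemma segdir_next s : (s = 1 \/ s = -1)%Z ->
  (forall j, 0 < j < N - 1 -> turningb l j = true -> dirv l (S j) = rs s (dirv l j)) ->
  forall i, 1 <= i -> i + 1 <= K - 1 -> segdir (i + 1) = rs s (segdir i).
Proof.
  intros Hs Hturn i Hi1 Hi2. unfold segdir.
  pose proof (tp_in i ltac:(lia)) as [HiN Hti].
  pose proof (proj2 (tp_lt_iff i (K-1) ltac:(lia) ltac:(lia)) ltac:(lia)) as HH. rewrite tp_last in HH.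
  pose proof (tp_pos i ltac:(lia)).
  rewrite <- (Hturn (tp i)); [| lia | exact Hti].
  symmetry. apply seg_dir; [lia|]. replace (i + 1 - 1) with i by lia.
  pose proof (proj2 (tp_lt_iff i (i+1) ltac:(lia) ltac:(lia)) ltac:(lia)). lia.
Qed.

Lemma segdir_opp j : 1 <= j -> j + 2 <= K - 1 -> segdir (j + 2) = pneg (segdir j).
Proof.
  intros H1 H2. destruct turn_dir as [s [Hs Hturn]].
  replace (j + 2) with ((j + 1) + 1) by lia.
  rewrite (segdir_next s Hs Hturn (j+1)), (segdir_next s Hs Hturn j) by lia. apply rs_rs; auto.
Qed.

(** Four consecutive segments (lengths a, b, a+1, b+1) end one diagonal step inside
    their starting point. *)
Lemma spiral_loop n : n + 4 <= K - 1 ->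
  pt l (tp (n + 4)) = psub (psub (pt l (tp n)) (segdir (n + 1))) (segdir (n + 2)).
Proof.
  intros Hn.
  replace (n + 4) with (S (S (S (S n)))) by lia.
  rewrite !pt_tp by lia.
  replace (S (S (S (S n)))) with ((n + 2) + 2) by lia.
  replace (S (S (S n))) with ((n + 1) + 2) by lia.
  rewrite !segdir_opp, !len_succ2 by lia.
  replace (S n) with (n + 1) by lia. replace (S (n + 1)) with (n + 2) by lia.
  rewrite !Nat2Z.inj_succ. point_eq.
Qed.

Lemma spiral_inner_start i : 3 <= i <= 4 -> i + 1 <= K - 1 ->
  len i = 2 /\
  pt l 0 = padd (padd (pt l (tp (i - 1))) (pscale 1%Z (segdir i))) (segdir (i + 1)).
Proof.
  intros Hi HiK.
  assert (Hlen1 : len 1 = 1) by (rewrite len_rec by lia; reflexivity).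
  assert (Hlen2 : len 2 = 1) by (rewrite len_rec by lia; reflexivity).
  assert (Hp1 : pt l (tp 1) = padd (pt l 0) (segdir 1))
    by (rewrite (pt_tp 0), tp_first, Hlen1 by lia; point_eq).
  assert (Hp2 : pt l (tp 2) = padd (pt l (tp 1)) (segdir 2))
    by (rewrite (pt_tp 1), Hlen2 by lia; point_eq).
  assert (D3 : segdir 3 = pneg (segdir 1)) by (apply (segdir_opp 1); lia).
  assert (D4 : segdir 4 = pneg (segdir 2)) by (apply (segdir_opp 2); lia).
  assert (Hlen3 : len 3 = 2)
    by (pose proof (len_succ2 1) as H; change (1 + 2) with 3 in H; rewrite H, Hlen1 by lia; auto).
  destruct (Nat.eq_dec i 3) as [->|Hne]; simpl (3 - 1); simpl (3 + 1).
  - split; auto. rewrite Hp2, Hp1, D3, D4. point_eq.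
  - replace i with 4 by lia. simpl (4 - 1); simpl (4 + 1).
    assert (D5 : segdir 5 = pneg (segdir 3)) by (apply (segdir_opp 3); lia).
    split; [pose proof (len_succ2 2) as H; change (2 + 2) with 4 in H; rewrite H, Hlen2 by lia; auto|].
    rewrite (pt_tp 2), Hp2, Hp1, Hlen3, D5, D4, D3 by lia. point_eq.
Qed.

Lemma spiral_inner_parallel n c : n + 6 <= K - 1 -> 1 <= c < len (n + 5) ->
  exists b, b <= tp (n + 4) /\
    pt l b = padd (padd (pt l (tp (n + 4))) (pscale (Z.of_nat c) (segdir (n + 5)))) (segdir (n + 6)).
Proof.
  intros HnK Hc.
  assert (Hlen : len (n + 5) = S (S (len (n + 1))))
    by (replace (n + 5) with ((n + 1) + 2 + 2) by lia; rewrite !len_succ2 by lia; reflexivity).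
  exists (tp n + (c - 1)). split.
  - pose proof (tp_mono n (n + 1) ltac:(lia)). pose proof (tp_mono (n + 1) (n + 4) ltac:(lia)).
    pose proof (len_tp (n + 1)). replace (n + 1 - 1) with n in * by lia. lia.
  - pose proof (pt_seg (n + 1) (c - 1) ltac:(lia) ltac:(lia)) as Hb.
    replace (n + 1 - 1) with n in Hb by lia. rewrite Hb, spiral_loop by lia.
    replace (segdir (n + 5)) with (segdir (n + 1))
      by (replace (n + 5) with (n + 1 + 2 + 2) by lia;
          rewrite (segdir_opp (n + 1 + 2)), (segdir_opp (n + 1)), pneg_pneg by lia; reflexivity).
    replace (segdir (n + 6)) with (segdir (n + 2))
      by (replace (n + 6) with (n + 2 + 2 + 2) by lia;
          rewrite (segdir_opp (n + 2 + 2)), (segdir_opp (n + 2)), pneg_pneg by lia; reflexivity).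
    rewrite Nat2Z.inj_sub by lia. point_eq.
Qed.

Lemma spiral_inner_neighbour i c : 3 <= i -> i + 1 <= K - 1 -> 1 <= c < len i ->
  exists b, b <= tp (i - 1) /\
    pt l b = padd (padd (pt l (tp (i - 1))) (pscale (Z.of_nat c) (segdir i))) (segdir (i + 1)).
Proof.
  intros Hi3 HiK Hc. destruct (Nat.le_gt_cases i 4) as [Hi4|Hi4].
  - destruct (spiral_inner_start i ltac:(lia) HiK) as [Hlen Hpt].
    exists 0. split; [lia|]. replace c with 1 by lia. exact Hpt.
  - destruct (spiral_inner_parallel (i - 5) c) as [b Hb]; [lia | replace (i - 5 + 5) with i by lia; lia|].
    exists b. replace (i - 5 + 4) with (i - 1) in Hb by lia.
    replace (i - 5 + 5) with i in Hb by lia. replace (i - 5 + 6) with (i + 1) in Hb by lia. exact Hb.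
Qed.


Section Growth.
Variables (F : state) (w : Point).
Hypothesis HIF : tree_inv F.
Hypothesis HszF : sz F = length l.
Hypothesis Hw0 : padd (pos F 0) w = pt l 0.
Hypothesis HwIn : forall i, i < sz F -> In (padd (pos F i) w) l.
Hypothesis HwSurj : forall q, In q l -> exists i, i < sz F /\ padd (pos F i) w = q.
Hypothesis HwEdge : forall p q, is_path_edge l p q ->
  exists i, 0 < i < sz F /\
    ((p = padd (pos F i) w /\ q = padd (pos F (par F i)) w) \/
     (q = padd (pos F i) w /\ p = padd (pos F (par F i)) w)).

Definition fpos x := padd (pos F x) w.
Definition idx x := idxof (fpos x) l.

Lemma idx_lt x : x < N -> idx x < N.
Proof. intros H. apply idxof_spec, HwIn. lia. Qed.

Lemma pt_idx x : x < N -> pt l (idx x) = fpos x.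
Proof. intros H. apply idxof_spec, HwIn. lia. Qed.

Lemma fpos_inj x y : x < N -> y < N -> fpos x = fpos y -> x = y.
Proof.
  intros Hx Hy H. apply (ti_pos_inj HIF); try lia.
  unfold fpos in H. apply point_ext; [apply (f_equal fst) in H|apply (f_equal snd) in H];
    unfold padd in H; cbn [fst snd] in H; lia.
Qed.

Lemma idx_inj x y : x < N -> y < N -> idx x = idx y -> x = y.
Proof. intros Hx Hy H. apply fpos_inj; auto. rewrite <- !pt_idx by auto. rewrite H; auto. Qed.

Lemma idx_nth j x : j < N -> x < N -> fpos x = pt l j -> idx x = j.
Proof. intros Hj Hx H. unfold idx. rewrite H. apply idxof_nth; auto. apply spiral_path. Qed.

Lemma idx0 : idx 0 = 0.
Proof. pose proof (ti_nonempty HIF). apply idx_nth; try lia. apply Hw0. Qed.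

Lemma idx_pos x : 0 < x < N -> 0 < idx x.
Proof.
  intros H. destruct (Nat.eq_dec (idx x) 0) as [E|E]; [|lia].
  rewrite <- idx0 in E. apply idx_inj in E; lia.
Qed.

Lemma idx_surj j : j < N -> exists x, x < N /\ idx x = j.
Proof.
  intros Hj. destruct (HwSurj (pt l j)) as [x [Hx Hx2]]; [apply nth_In; auto|].
  exists x; split; [lia|]. apply idx_nth; auto; lia.
Qed.

(** The parent of a node of [F] is the preceding node on the path: by induction on
    the index, using that the edge {j, j+1} of the path is an edge of [F]. *)
Lemma idx_par x : 0 < x < N -> idx (par F x) = idx x - 1.
Proof.
  assert (Hgen : forall j y, y < N -> idx y = j -> 0 < j -> idx (par F y) = j - 1).
  { induction j; intros y Hx Hix Hj; [lia|].
    assert (Hj1 : S j < N) by (rewrite <- Hix; apply idx_lt; auto).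
    destruct (HwEdge (pt l j) (pt l (S j))) as [i [Hi [[E1 E2]|[E1 E2]]]]; [exists j; auto| |].
    - (* the path edge is oriented towards the end: then j = 0 is impossible *)
      assert (Hpi : par F i = y).
      { apply fpos_inj; [rewrite <- HszF; apply (ti_par_lt HIF); lia | auto | ].
        unfold fpos. rewrite <- E2, <- Hix. apply pt_idx; auto. }
      assert (Hii : idx i = j) by (apply idx_nth; try lia; auto).
      destruct j.
      + rewrite <- idx0 in Hii. apply idx_inj in Hii; lia.
      + specialize (IHj i ltac:(lia) Hii ltac:(lia)). rewrite Hpi, Hix in IHj. lia.
    - assert (i = y).
      { apply fpos_inj; [lia | auto | ]. unfold fpos. rewrite <- E1, <- Hix. apply pt_idx; auto. }
      subst i. replace (S j - 1) with j by lia.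
      apply idx_nth; [lia | rewrite <- HszF; apply (ti_par_lt HIF); lia | auto]. }
  intros Hx. apply (Hgen (idx x)); auto; [lia|apply idx_pos; auto].
Qed.

Lemma evec_F x : 0 < x < N -> evec F x = dirv l (idx x).
Proof.
  intros Hx. unfold dirv, evec. rewrite <- (idx_par x Hx).
  rewrite (pt_idx x), (pt_idx (par F x)) by (try rewrite <- HszF; try apply (ti_par_lt HIF); lia).
  unfold fpos. point_eq.
Qed.

Lemma idx_iter x m : x < N -> m <= idx x ->
  Nat.iter m (par F) x < N /\ idx (Nat.iter m (par F) x) = idx x - m.
Proof.
  intros Hx. induction m; intros Hm; [simpl; split; [exact Hx | lia]|].
  destruct IHm as [h1 h2]; [lia|]. rewrite Nat.iter_succ. split.
  - rewrite <- HszF in *. apply (ti_par_lt HIF); lia.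
  - destruct (Nat.eq_dec (Nat.iter m (par F) x) 0) as [E|E].
    + rewrite E, idx0 in h2. lia.
    + rewrite idx_par by lia. lia.
Qed.

(** ** Present indices and the compressed path *)
Definition present (G : state) (j : nat) : bool :=
  existsb (fun x => Nat.eqb (idx x) j) (seq 0 (sz G)).

Lemma present_spec G j : present G j = true <-> exists x, x < sz G /\ idx x = j.
Proof.
  unfold present. rewrite existsb_exists. split.
  - intros [x [H1 H2]]. apply in_seq in H1. apply Nat.eqb_eq in H2. exists x; split; auto; lia.
  - intros [x [H1 H2]]. exists x. split; [apply in_seq; lia| apply Nat.eqb_eq; auto].
Qed.

Lemma present_lt G j : refines G F -> present G j = true -> j < N.
Proof. intros [Hs _] H. apply present_spec in H as [x [Hx <-]]. apply idx_lt. lia. Qed.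

Lemma present_0 G : tree_inv G -> present G 0 = true.
Proof. intros HI. apply present_spec. exists 0. split; [apply (ti_nonempty HI)| apply idx0]. Qed.

Lemma present_mono G G' j : sz G <= sz G' -> present G j = true -> present G' j = true.
Proof.
  intros H P. apply present_spec in P as [x [? ?]]. apply present_spec. exists x; split; auto; lia.
Qed.

Lemma refined_edge G x : refines G F -> 0 < x < sz G -> exists m, 1 <= m <= idx x /\
  idx (par G x) = idx x - m /\
  (forall y, y < sz G -> ~ (idx x - m < idx y < idx x)) /\
  (forall j, idx x - m < j <= idx x -> dirv l j = evec G x).
Proof.
  intros [Hs R] Hx. destruct (R x Hx) as [m [Hm [Hit [Hint Hev]]]].
  assert (HxN : x < N) by lia.
  assert (Hmi : m <= idx x).
  { destruct (Nat.le_gt_cases m (idx x)) as [h|h]; auto. exfalso.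
    destruct (idx_iter x (idx x) HxN ltac:(lia)) as [h1 h2].
    replace (idx x - idx x) with 0 in h2 by lia. rewrite <- idx0 in h2.
    apply idx_inj in h2; [|auto|pose proof (ti_nonempty HIF); lia].
    pose proof (idx_pos x ltac:(lia)). specialize (Hint (idx x) ltac:(lia)). lia. }
  exists m. repeat split; try lia.
  - rewrite <- Hit. apply idx_iter; auto.
  - intros y Hy [H1 H2]. destruct (idx_iter x (idx x - idx y) HxN ltac:(lia)) as [h1 h2].
    replace (idx x - (idx x - idx y)) with (idx y) in h2 by lia.
    apply idx_inj in h2; auto; [|lia].
    specialize (Hint (idx x - idx y) ltac:(lia)). lia.
  - intros j Hj. destruct (idx_iter x (idx x - j) HxN ltac:(lia)) as [h1 h2].
    rewrite <- (Hev (idx x - j)) by lia. rewrite evec_F.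
    + f_equal. rewrite h2. lia.
    + split; auto. destruct (Nat.eq_dec (Nat.iter (idx x - j) (par F) x) 0) as [E|E]; [|lia].
      rewrite E, idx0 in h2. lia.
Qed.

Fixpoint prev_present (G : state) (j : nat) : nat :=
  match j with 0 => 0 | S j' => if present G j' then j' else prev_present G j' end.

Lemma prev_present_spec G j : present G 0 = true -> 0 < j ->
  present G (prev_present G j) = true /\ prev_present G j < j /\
  forall i, prev_present G j < i < j -> present G i = false.
Proof.
  intros H0. induction j; intros Hj; [lia|]. simpl.
  destruct (present G j) eqn:E.
  - repeat split; auto. intros; lia.
  - destruct j; [rewrite H0 in E; discriminate|].
    destruct IHj as [h1 [h2 h3]]; [lia|]. repeat split; auto.
    intros i Hi. destruct (Nat.eq_dec i (S j)); [subst; auto|]. apply h3; lia.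
Qed.

Lemma par_prev_present G x : tree_inv G -> refines G F -> 0 < x < sz G ->
  idx (par G x) = prev_present G (idx x).
Proof.
  intros HI HR Hx. destruct (refined_edge G x HR Hx) as [m [Hm [Hp [Hno _]]]].
  destruct (prev_present_spec G (idx x) (present_0 G HI) ltac:(lia)) as [h1 [h2 h3]].
  assert (Hpp : present G (idx (par G x)) = true)
    by (apply present_spec; exists (par G x); split; auto; apply (ti_par_lt HI); lia).
  destruct (Nat.lt_total (idx (par G x)) (prev_present G (idx x))) as [h|[h|h]]; auto; exfalso.
  - apply present_spec in h1 as [y [Hy Hy2]]. apply (Hno y Hy). lia.
  - rewrite h3 in Hpp; [discriminate|lia].
Qed.

Fixpoint csum (G : state) (j : nat) : Point :=
  match j with
  | 0 => (0%Z, 0%Z)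
  | S j' => padd (csum G j') (if present G (S j') then dirv l (S j') else (0%Z,0%Z))
  end.

Lemma csum_skip G a b : a <= b -> (forall q, a < q <= b -> present G q = false) ->
  csum G b = csum G a.
Proof.
  induction 1 as [|b Hab IHle]; intros Hq; auto. simpl. rewrite Hq by lia.
  rewrite IHle by (intros; apply Hq; lia). point_eq.
Qed.

Lemma csum_pos G x : tree_inv G -> refines G F -> x < sz G ->
  psub (pos G x) (pos G 0) = csum G (idx x).
Proof.
  intros HI HR. remember (idx x) as j eqn:Ej. revert x Ej.
  induction j as [j IH] using lt_wf_ind. intros x Ej Hx.
  destruct (Nat.eq_dec x 0) as [->|Hx0]; [rewrite idx0 in Ej; subst j; simpl; point_eq|].
  destruct (refined_edge G x HR ltac:(lia)) as [m [Hm [Hp [Hno Hdir]]]].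
  assert (IHp := IH (idx (par G x)) ltac:(lia) (par G x) eq_refl (ti_par_lt HI x Hx)).
  destruct j as [|j]; [lia|]. simpl.
  assert (Hpx : present G (S j) = true) by (apply present_spec; exists x; auto).
  rewrite Hpx, (csum_skip G (idx (par G x)) j); [| lia |].
  - rewrite <- IHp, Ej, Hdir by lia. unfold evec. point_eq.
  - intros q Hq. destruct (present G q) eqn:E; auto. exfalso.
    apply present_spec in E as [y [Hy Hy2]]. apply (Hno y Hy). lia.
Qed.

Lemma csum_inj G a b : tree_inv G -> refines G F -> present G a = true -> present G b = true ->
  csum G a = csum G b -> a = b.
Proof.
  intros HI HR Ha Hb E.
  apply present_spec in Ha as [xa [Hxa <-]]. apply present_spec in Hb as [xb [Hxb <-]].
  rewrite <- (csum_pos G xa), <- (csum_pos G xb) in E by auto.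
  assert (xa = xb); [|subst; auto].
  apply (ti_pos_inj HI); auto.
  apply point_ext; [apply (f_equal fst) in E|apply (f_equal snd) in E];
    unfold psub in E; cbn [fst snd] in E; lia.
Qed.


(** Every turning point up to a present index is present: an edge of [G] spans
    path steps of a single direction, so it cannot jump over a turning point. *)
Lemma present_tp G j i : tree_inv G -> refines G F -> present G j = true -> i < K ->
  tp i <= j -> present G (tp i) = true.
Proof.
  intros HI HR. revert j. induction j as [j IH] using lt_wf_ind. intros Hp Hi Hij.
  destruct (Nat.eq_dec (tp i) j) as [<-|Hne]; auto.
  destruct (Nat.eq_dec i 0) as [->|Hi0]; [rewrite tp_first; apply present_0; auto|].
  apply present_spec in Hp as [y [Hy Hyj]].
  assert (Hy0 : y <> 0) by (intros ->; rewrite idx0 in Hyj; pose proof (tp_pos i); lia).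
  destruct (refined_edge G y HR ltac:(lia)) as [m [Hm [Hpar [Hno Hdir]]]].
  destruct (Nat.le_gt_cases (tp i) (idx y - m)) as [h|h].
  - apply (IH (idx (par G y))); try lia. apply present_spec. exists (par G y).
    split; auto. apply (ti_par_lt HI); lia.
  - exfalso. destruct turn_dir as [s [Hs Hturn]].
    pose proof (present_lt G j HR (proj2 (present_spec G j) (ex_intro _ y (conj Hy Hyj)))).
    pose proof (tp_in i Hi) as [HiN Hti]. pose proof (tp_pos i ltac:(lia)).
    assert (E1 : dirv l (tp i) = dirv l (S (tp i))) by (rewrite !Hdir; auto; lia).
    rewrite Hturn in E1 by (auto; lia).
    apply (rs_neq s (dirv l (tp i)) Hs); [apply dir_unit; lia| auto].
Qed.

Definition seg_indices i := seq (tp (i - 1) + 1) (len i).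

Lemma in_seg_indices i q : In q (seg_indices i) <-> tp (i - 1) < q <= tp i /\ tp (i - 1) <= tp i.
Proof. unfold seg_indices. rewrite in_seq, len_tp. lia. Qed.

Definition seg_count (G : state) i := length (filter (present G) (seg_indices i)).

Lemma seg_count_le G i : seg_count G i <= len i.
Proof.
  unfold seg_count, seg_indices.
  pose proof (filter_length_le (present G) (seq (tp (i-1) + 1) (len i))). rewrite length_seq in *. auto.
Qed.

Lemma seg_count_full G i : seg_count G i = len i -> forall q, tp (i - 1) < q <= tp i -> present G q = true.
Proof.
  intros H0 q Hq. unfold seg_count, seg_indices in H0.
  assert (Hall : length (filter (present G) (seq (tp (i - 1) + 1) (len i)))
                 = length (seq (tp (i - 1) + 1) (len i))) by (rewrite length_seq; auto).
  apply filter_length_forallb in Hall. rewrite forallb_forall in Hall. apply Hall.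
  apply in_seq. rewrite len_tp. lia.
Qed.

Lemma seg_count_pos G i : 1 <= i < K -> present G (tp i) = true -> 0 < seg_count G i.
Proof.
  intros Hi Hp. unfold seg_count.
  assert (Hin : In (tp i) (filter (present G) (seg_indices i))).
  { apply filter_In. split; auto. apply in_seg_indices.
    pose proof (len_pos i Hi). rewrite len_tp in *. lia. }
  destruct (filter _ _); simpl in *; [tauto|lia].
Qed.

Lemma seg_count_pos_ex G i : 0 < seg_count G i -> exists q, tp (i - 1) < q <= tp i /\ present G q = true.
Proof.
  unfold seg_count. destruct (filter (present G) (seg_indices i)) as [|q r] eqn:E; simpl; [lia|].
  intros _. assert (Hin : In q (filter (present G) (seg_indices i))) by (rewrite E; left; auto).
  apply filter_In in Hin as [H1 H2]. apply in_seg_indices in H1. exists q. split; auto. lia.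
Qed.

Lemma csum_run G a r v : (forall q, a < q <= a + r -> dirv l q = v) ->
  csum G (a + r) = padd (csum G a) (pscale (Z.of_nat (length (filter (present G) (seq (a + 1) r)))) v).
Proof.
  induction r; intros Hd.
  - rewrite Nat.add_0_r. simpl. point_eq.
  - rewrite Nat.add_succ_r. simpl csum. rewrite IHr by (intros; apply Hd; lia).
    rewrite seq_S, filter_app, length_app. replace (a + 1 + r) with (S (a + r)) by lia.
    simpl filter. rewrite Hd by lia.
    destruct (present G (S (a + r))); simpl length; rewrite ?Nat2Z.inj_add; point_eq.
Qed.

Lemma csum_seg G i : 1 <= i <= K - 1 ->
  csum G (tp i) = padd (csum G (tp (i - 1))) (pscale (Z.of_nat (seg_count G i)) (segdir i)).
Proof.
  intros Hi. pose proof (len_pos i ltac:(lia)). pose proof (tp_mono (i-1) i ltac:(lia)).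
  replace (tp i) with (tp (i - 1) + len i) at 1 by (rewrite len_tp; lia).
  apply csum_run. intros q Hq. apply seg_dir; auto. rewrite len_tp in *; lia.
Qed.

Lemma csum_full G j : (forall q, 0 < q <= j -> present G q = true) ->
  csum G j = psub (pt l j) (pt l 0).
Proof.
  induction j; intros H; simpl; [point_eq|].
  rewrite H, IHj by (first [lia | intros; apply H; lia]). rewrite dir_S. point_eq.
Qed.

(** Key consequence of incompressibility: once some index beyond [tp i] is present,
    segment [i] is complete. Otherwise, with all earlier segments complete, the
    first present index after [tp i] would have the compressed position of an
    earlier present index, one step inside segment [i] (a collision). *)
Lemma segment_complete G : tree_inv G -> refines G F -> forall i, 1 <= i -> i + 1 <= K - 1 ->
  (exists j, present G j = true /\ tp i < j) -> seg_count G i = len i.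
Proof.
  intros HI HR i. induction i as [i IH] using lt_wf_ind. intros Hi1 Hi2 [j [Hj Hjt]].
  pose proof (present_lt G j HR Hj) as HjN.
  assert (Hprev : forall q, 0 < q <= tp (i - 1) -> present G q = true).
  { intros q Hq. pose proof (tp_in (i-1) ltac:(lia)) as [HTN _].
    destruct (seg_cover q ltac:(lia)) as [i' [Hi' Hq']].
    assert (i' <= i - 1).
    { destruct (Nat.le_gt_cases i' (i-1)) as [h|h]; auto.
      pose proof (tp_mono (i-1) (i'-1) ltac:(lia)). lia. }
    apply (seg_count_full G i'); [|lia].
    apply IH; try lia. exists j. split; auto. pose proof (tp_mono i' i ltac:(lia)). lia. }
  clear IH.
  destruct (Nat.eq_dec (seg_count G i) (len i)) as [E|E]; auto. exfalso.
  set (c := seg_count G i) in *. pose proof (seg_count_le G i) as Hcle.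
  assert (Hti : present G (tp i) = true) by (apply (present_tp G j i); auto; lia).
  pose proof (seg_count_pos G i ltac:(lia) Hti) as Hc1.
  assert (Hi3 : 3 <= i)
    by (destruct (Nat.le_gt_cases 3 i); auto; rewrite len_rec in Hcle, E by lia;
        destruct (Nat.leb_spec i 2); lia).
  (* [z]: the first present index after [tp i]; it lies in segment [i + 1] *)
  destruct (exists_min (fun z => present G z = true /\ tp i < z)) as [z [[Hz1 Hz2] Hmin]];
    [exists j; auto|].
  pose proof (proj2 (tp_lt_iff i (i+1) ltac:(lia) ltac:(lia)) ltac:(lia)) as Hii.
  assert (Hz3 : z <= tp (i + 1)).
  { destruct (Nat.le_gt_cases z (tp (i+1))) as [h|h]; auto. exfalso.
    apply (Hmin (tp (i+1))); auto. split; [apply (present_tp G z (i+1)); auto; lia| lia]. }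
  assert (Hcz : csum G z = padd (csum G (tp i)) (segdir (i+1))).
  { destruct z as [|z']; [lia|]. simpl csum. rewrite Hz1.
    rewrite (csum_skip G (tp i) z'); [| lia | ].
    - f_equal. apply (seg_dir (i+1)); [lia|]. replace (i+1-1) with i by lia. lia.
    - intros q Hq. destruct (present G q) eqn:Eq; auto. exfalso. apply (Hmin q); [lia|split; auto; lia]. }
  rewrite csum_seg, (csum_full G (tp (i - 1)) Hprev) in Hcz by lia.
  destruct (spiral_inner_neighbour i c Hi3 Hi2 ltac:(lia)) as [b [Hb Hptb]].
  assert (Hpb : present G b = true)
    by (destruct (Nat.eq_dec b 0) as [->|]; [apply present_0; auto| apply Hprev; lia]).
  assert (Hcb : csum G b = csum G z)
    by (rewrite (csum_full G b) by (intros; apply Hprev; lia); rewrite Hcz, Hptb; point_eq).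
  pose proof (csum_inj G b z HI HR Hpb Hz1 Hcb).
  pose proof (proj2 (tp_lt_iff (i-1) i ltac:(lia) ltac:(lia)) ltac:(lia)). lia.
Qed.


(** ** The potential

   It is 0 for the initial node, equals
   sum_i log2 (l(s_i) + 1) at the end, and grows by at most 2 per time step. *)
Definition potential (G : state) : nat :=
  lsum (fun i => Nat.log2 (seg_count G i + 1)) (seq 1 (K - 1)).

Section OneStep.
Variables (G G' : state).
Hypotheses (HI : tree_inv G) (HI' : tree_inv G') (HR : refines G F) (HR' : refines G' F)
  (Hle : sz G <= sz G') (Hnp : forall x, sz G <= x < sz G' -> par G' x < sz G).

Definition max_present := prev_present G' N.

Lemma max_present_spec : present G' max_present = true /\
  forall j, present G' j = true -> j <= max_present.
Proof.
  destruct (prev_present_spec G' N (present_0 G' HI') N_pos) as [h1 [h2 h3]]. split; auto.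
  intros j Hj. pose proof (present_lt G' j HR' Hj).
  destruct (Nat.le_gt_cases j max_present); auto.
  unfold max_present in *. rewrite h3 in Hj; [discriminate|lia].
Qed.

(** An index newly present in [G'] (other than the largest) is the previous present
    index, in [G'], of an index of the same segment already present in [G]: the node
    above it in [G'] is old, since new nodes hang from old ones. *)
Lemma new_index_below_old i j : 1 <= i <= K - 1 -> In j (seg_indices i) ->
  present G' j = true -> present G j = false -> j <> max_present ->
  In j (map (prev_present G') (filter (present G) (seg_indices i))).
Proof.
  intros Hi Hj P' P HM. destruct max_present_spec as [HM1 HM2]. specialize (HM2 j P').
  destruct (exists_min (fun y => present G' y = true /\ j < y)) as [y [[Hy1 Hy2] Hmin]];
    [exists max_present; split; auto; lia|].
  pose proof (prev_present_spec G' y (present_0 G' HI') ltac:(lia)) as [m1 [m2 m3]].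
  assert (Hmj : prev_present G' y = j).
  { destruct (Nat.lt_total (prev_present G' y) j) as [h|[h|h]]; auto; exfalso.
    - rewrite m3 in P'; [discriminate|lia].
    - apply (Hmin (prev_present G' y)); [lia|]. split; auto. }
  apply in_map_iff. exists y. split; auto.
  apply present_spec in Hy1 as [ny [Hny Hny2]].
  assert (Hny0 : ny <> 0) by (intros ->; rewrite idx0 in Hny2; lia).
  pose proof (par_prev_present G' ny HI' HR' ltac:(lia)) as Hp. rewrite Hny2, Hmj in Hp.
  assert (Hold : ny < sz G).
  { destruct (Nat.lt_ge_cases ny (sz G)) as [h|h]; auto. exfalso.
    specialize (Hnp ny ltac:(lia)).
    assert (present G j = true) by (apply present_spec; exists (par G' ny); auto).
    congruence. }
  assert (PG : present G y = true) by (apply present_spec; exists ny; auto).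
  apply filter_In. split; auto. apply in_seg_indices in Hj. apply in_seg_indices.
  split; [|lia]. split; [lia|].
  destruct (Nat.le_gt_cases y (tp i)) as [h|h]; auto. exfalso.
  assert (PT : present G (tp i) = true) by (apply (present_tp G y i); auto; lia).
  destruct (Nat.eq_dec j (tp i)) as [->|hj]; [congruence|].
  apply (Hmin (tp i)); [lia|]. split; [apply (present_mono G G'); auto| lia].
Qed.

Definition holds_max i := if Nat.ltb (tp (i - 1)) max_present && Nat.leb max_present (tp i) then 1 else 0.

Lemma seg_count_step i : 1 <= i <= K - 1 -> seg_count G' i <= 2 * seg_count G i + holds_max i.
Proof.
  intros Hi. unfold seg_count, holds_max.
  rewrite (filter_split (present G) (present G') (seg_indices i))
    by (intros; apply (present_mono G G'); auto).
  set (nw := filter (fun x => present G' x && negb (present G x)) (seg_indices i)).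
  assert (ND : NoDup nw) by (apply NoDup_filter, seq_NoDup).
  assert (Hnew : forall j, In j nw -> j = max_present \/
                   In j (map (prev_present G') (filter (present G) (seg_indices i)))).
  { intros j Hj. unfold nw in Hj. apply filter_In in Hj as [Hj1 Hj2].
    apply andb_true_iff in Hj2 as [P' P]. apply negb_true_iff in P.
    destruct (Nat.eq_dec j max_present) as [->|h]; [left; auto| right; apply new_index_below_old; auto]. }
  destruct (Nat.ltb (tp (i - 1)) max_present && Nat.leb max_present (tp i)) eqn:E.
  - assert (Hinc' : incl nw (max_present :: map (prev_present G') (filter (present G) (seg_indices i))))
      by (intros j Hj; destruct (Hnew j Hj) as [->|h]; [left|right]; auto).
    pose proof (NoDup_incl_length ND Hinc') as Hlen. simpl in Hlen. rewrite length_map in Hlen. lia.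
  - assert (Hinc' : incl nw (map (prev_present G') (filter (present G) (seg_indices i)))).
    { intros j Hj. destruct (Hnew j Hj) as [->|h]; auto. exfalso.
      unfold nw in Hj. apply filter_In in Hj as [Hj1 _]. apply in_seg_indices in Hj1.
      apply andb_false_iff in E as [E|E]; [apply Nat.ltb_ge in E| apply Nat.leb_gt in E]; lia. }
    pose proof (NoDup_incl_length ND Hinc') as Hlen. rewrite length_map in Hlen. lia.
Qed.

Lemma seg_count_mono i : seg_count G i <= seg_count G' i.
Proof.
  unfold seg_count. rewrite (filter_split (present G) (present G'))
    by (intros; apply (present_mono G G'); auto). lia.
Qed.

Definition partial_seg i := if Nat.ltb 0 (seg_count G i) && Nat.ltb (seg_count G i) (len i) then 1 else 0.

(** The logarithmic count of a segment grows by at most 1 if it is partial (it at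
    most doubles) and by 1 more if it holds the largest index; an empty segment
    not holding it stays empty, a complete one stays complete. *)
Lemma seg_log_step i : 1 <= i <= K - 1 ->
  Nat.log2 (seg_count G' i + 1) <= Nat.log2 (seg_count G i + 1) + partial_seg i + holds_max i.
Proof.
  intros Hi. pose proof (seg_count_step i Hi) as H1. pose proof (seg_count_mono i) as H2.
  pose proof (seg_count_le G' i) as H3. pose proof (seg_count_le G i) as H4.
  assert (holds_max i <= 1) by (unfold holds_max; destruct (_ && _); lia).
  unfold partial_seg.
  destruct (Nat.ltb_spec 0 (seg_count G i)), (Nat.ltb_spec (seg_count G i) (len i)); simpl.
  - assert (Hb2 : seg_count G' i + 1 <= 2 * (seg_count G i + 1)) by lia.
    pose proof (Nat.log2_le_mono _ _ Hb2) as Hlg. rewrite Nat.log2_double in Hlg by lia. lia.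
  - replace (seg_count G' i) with (seg_count G i) by lia. lia.
  - assert (Hb : seg_count G' i <= holds_max i) by lia. replace (seg_count G i) with 0 by lia.
    assert (Hlog : Nat.log2 (seg_count G' i + 1) <= Nat.log2 (holds_max i + 1))
      by (apply Nat.log2_le_mono; lia).
    change (Nat.log2 (0 + 1)) with 0.
    destruct (holds_max i) as [|[|]]; [change (Nat.log2 (0 + 1)) with 0 in Hlog
      |change (Nat.log2 (1 + 1)) with 1 in Hlog|]; lia.
  - pose proof (len_pos i ltac:(lia)). lia.
Qed.

(** By [segment_complete], a partial segment is the last non-empty one. *)
Lemma partial_seg_unique : lsum partial_seg (seq 1 (K - 1)) <= 1.
Proof.
  apply lsum_01; [apply seq_NoDup| intros; unfold partial_seg; destruct (_ && _); lia|].
  assert (Hlt : forall i j, 1 <= i -> j <= K - 1 -> i < j -> partial_seg j = 1 ->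
                 seg_count G i = len i).
  { intros i j Hi Hj Hij Aj. unfold partial_seg in Aj.
    destruct (Nat.ltb_spec 0 (seg_count G j)); simpl in Aj; [|lia].
    destruct (seg_count_pos_ex G j ltac:(lia)) as [q [Hq Pq]].
    apply segment_complete; auto; try lia. exists q. split; auto.
    pose proof (tp_mono i (j-1) ltac:(lia)). lia. }
  intros i j Hi Hj Ai Aj. apply in_seq in Hi, Hj.
  assert (Hfull : forall i, partial_seg i = 1 -> seg_count G i < len i)
    by (intros i' A; unfold partial_seg in A;
        destruct (Nat.ltb_spec (seg_count G i') (len i')); [lia|]; rewrite andb_false_r in A; discriminate).
  destruct (Nat.lt_total i j) as [h|[h|h]]; auto; exfalso.
  - pose proof (Hlt i j ltac:(lia) ltac:(lia) h Aj). pose proof (Hfull i Ai). lia.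
  - pose proof (Hlt j i ltac:(lia) ltac:(lia) h Ai). pose proof (Hfull j Aj). lia.
Qed.

Lemma holds_max_unique : lsum holds_max (seq 1 (K - 1)) <= 1.
Proof.
  apply lsum_01; [apply seq_NoDup| intros; unfold holds_max; destruct (_ && _); lia|].
  intros i j Hi Hj Ai Aj. apply in_seq in Hi, Hj. unfold holds_max in Ai, Aj.
  destruct (Nat.ltb_spec (tp (i - 1)) max_present), (Nat.leb_spec max_present (tp i)); simpl in Ai; try lia.
  destruct (Nat.ltb_spec (tp (j - 1)) max_present), (Nat.leb_spec max_present (tp j)); simpl in Aj; try lia.
  destruct (Nat.lt_total i j) as [h|[h|h]]; auto; exfalso.
  - pose proof (tp_mono i (j-1) ltac:(lia)). lia.
  - pose proof (tp_mono j (i-1) ltac:(lia)). lia.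
Qed.

Lemma potential_step : potential G' <= potential G + 2.
Proof.
  unfold potential.
  pose proof (lsum_le (fun i => Nat.log2 (seg_count G' i + 1)) (fun i => Nat.log2 (seg_count G i + 1))
                partial_seg holds_max (seq 1 (K - 1))) as Hsum.
  pose proof partial_seg_unique. pose proof holds_max_unique.
  enough (lsum (fun i => Nat.log2 (seg_count G' i + 1)) (seq 1 (K - 1)) <=
          lsum (fun i => Nat.log2 (seg_count G i + 1)) (seq 1 (K - 1)) +
          lsum partial_seg (seq 1 (K - 1)) + lsum holds_max (seq 1 (K - 1))) by lia.
  apply Hsum. intros i Hi. apply in_seq in Hi. apply seg_log_step. lia.
Qed.
End OneStep.

Lemma potential_run steps : forall G, tree_inv G -> valid_run G steps -> run G steps = F ->
  potential F <= potential G + 2 * length steps.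
Proof.
  induction steps as [|[d o] r IH]; intros G HI Hv Hrun.
  - simpl in Hrun. subst. simpl. lia.
  - simpl in Hv, Hrun. destruct Hv as [Hcf Hv].
    set (G' := step G d o) in *.
    pose proof (step_tree_inv G d o HI Hcf) as HI'.
    pose proof (run_refines G' r HI' Hv) as [_ HR']. rewrite Hrun in HR'.
    assert (HR : refines G F) by (apply refines_trans with G'; auto; apply refines_step; auto).
    pose proof (potential_step G G' HI HI' HR HR' (sz_step_ge G d o)
                  (fun x Hx => new_par_old G d o x HI Hx)).
    specialize (IH G' HI' Hv Hrun). simpl length. lia.
Qed.

Lemma potential_init : potential init_state = 0.
Proof.
  unfold potential. rewrite (lsum_ext _ (fun _ => 0)).
  - induction (seq 1 (K - 1)); simpl; auto.
  - intros i Hi. apply in_seq in Hi. unfold seg_count. rewrite filter_none; [reflexivity|].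
    intros q Hq. apply in_seg_indices in Hq. destruct (present init_state q) eqn:E; auto.
    apply present_spec in E as [x [Hx Hx2]]. simpl in Hx. replace x with 0 in Hx2 by lia.
    rewrite idx0 in Hx2. lia.
Qed.

Lemma potential_final : potential F = lsum (fun i => Nat.log2 (len i + 1)) (seq 1 (K - 1)).
Proof.
  unfold potential. apply lsum_ext. intros i Hi. apply in_seq in Hi. unfold seg_count.
  rewrite filter_all; [unfold seg_indices; rewrite length_seq; auto|].
  intros q Hq. apply in_seg_indices in Hq. apply present_spec.
  pose proof (tp_in i ltac:(lia)) as [HiN _].
  destruct (idx_surj q ltac:(lia)) as [x [Hx Hx2]]. exists x. split; auto. lia.
Qed.

Lemma log_len_sum_le_steps steps : valid_run init_state steps -> run init_state steps = F ->
  lsum (fun i => Nat.log2 (len i + 1)) (seq 1 (K - 1)) <= 2 * length steps.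
Proof.
  intros Hv Hr. rewrite <- potential_final.
  pose proof (potential_run steps init_state init_tree_inv Hv Hr). rewrite potential_init in *. lia.
Qed.
End Growth.

(** Lower bound of the sum: the last [K - 2m] segments have length at least [m]. *)
Lemma log_len_sum_lb m : 1 <= m -> 4 * m <= K ->
  (K - 2 * m) * Nat.log2 m <= lsum (fun i => Nat.log2 (len i + 1)) (seq 1 (K - 1)).
Proof.
  intros Hm HmK. replace (K - 1) with ((2 * m - 1) + (K - 2 * m)) by lia.
  rewrite seq_app, lsum_app. replace (1 + (2 * m - 1)) with (2 * m) by lia.
  pose proof (lsum_ge_const (fun i => Nat.log2 (len i + 1)) (Nat.log2 m) (seq (2 * m) (K - 2 * m))) as H.
  rewrite length_seq in H.
  enough ((K - 2 * m) * Nat.log2 m <=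
          lsum (fun i => Nat.log2 (len i + 1)) (seq (2 * m) (K - 2 * m))) by lia.
  apply H. intros i Hi. apply in_seq in Hi.
  apply Nat.log2_le_mono. pose proof (len_lb i ltac:(lia)). lia.
Qed.
End Spiral.

Section RealBound.
Local Open Scope R_scope.

Lemma ln_le_mono x y : 0 < x -> x <= y -> ln x <= ln y.
Proof. intros Hx [H|H]; [left; apply ln_increasing; auto| subst; lra]. Qed.

Lemma ln2_lt1 : ln 2 < 1.
Proof.
  assert (H : 2 < exp 1) by (pose proof (exp_ineq1 1 ltac:(lra)); lra).
  rewrite <- (ln_exp 1). apply ln_increasing; lra.
Qed.

Lemma ln_lt_log2_succ m : (1 <= m)%nat -> ln (INR m) < INR (Nat.log2 m) + 1.
Proof.
  intros Hm. pose proof (Nat.log2_spec m ltac:(lia)) as [_ HL].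
  assert (h : INR m < 2 ^ S (Nat.log2 m)).
  { replace 2 with (INR 2) by (simpl; lra). rewrite <- pow_INR. apply lt_INR; auto. }
  apply ln_increasing in h; [|apply lt_0_INR; lia].
  rewrite ln_pow, S_INR in h by lra.
  pose proof ln2_lt1. pose proof ln_lt_2. pose proof (pos_INR (Nat.log2 m)). nra.
Qed.

Lemma ln_ge_8 k : 3 ^ 8 <= k -> 8 <= ln k.
Proof.
  intros Hk. assert (Hl : ln (3 ^ 8) <= ln k) by (apply ln_le_mono; [apply pow_lt; lra| lra]).
  rewrite ln_pow in Hl by lra.
  assert (1 <= ln 3) by (rewrite <- (ln_exp 1); apply ln_le_mono; [apply exp_pos| apply exp_le_3]).
  simpl INR in Hl. lra.
Qed.

Lemma real_bound (Kn Tn m : nat) : (3 ^ 8 <= Kn)%nat -> (4 * m <= Kn < 4 * m + 4)%nat ->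
  ((Kn - 2 * m) * Nat.log2 m <= 2 * Tn)%nat ->
  / 8 * INR Kn * ln (INR Kn) <= INR Tn.
Proof.
  intros HK Hm Hs.
  assert (Hm1 : (1 <= m)%nat) by (assert (8 <= 3 ^ 8)%nat by (simpl; lia); lia).
  set (k := INR Kn). set (t := INR Tn). set (mm := INR m). set (L := INR (Nat.log2 m)).
  assert (Hk : 3 ^ 8 <= k)
    by (unfold k; replace 3 with (INR 3) by (simpl; lra); rewrite <- pow_INR; apply le_INR; auto).
  assert (Hmm1 : 1 <= mm) by (unfold mm; replace 1 with (INR 1) by (simpl; lra); apply le_INR; auto).
  assert (Hkm : 4 * mm <= k <= 8 * mm)
    by (unfold mm, k; replace 4 with (INR 4) by (simpl; lra); replace 8 with (INR 8) by (simpl; lra);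
        rewrite <- !mult_INR; split; apply le_INR; lia).
  assert (Hs' : (k - 2 * mm) * L <= 2 * t).
  { unfold k, mm, L, t. replace 2 with (INR 2) by (simpl; lra).
    rewrite <- !mult_INR, <- minus_INR, <- mult_INR by lia. apply le_INR. auto. }
  assert (HL : ln mm < L + 1) by (apply ln_lt_log2_succ; auto).
  (* ln m >= ln K - ln 8 > ln K - 3, and ln K >= 8, so log2 m >= ln K / 2 *)
  assert (Hln8 : ln 8 < 3).
  { replace 8 with (2 ^ 3) by lra. rewrite ln_pow by lra. simpl INR. pose proof ln2_lt1. lra. }
  assert (Hlnm : ln k - ln 8 <= ln mm).
  { assert (Hl : ln k <= ln (8 * mm)) by (apply ln_le_mono; lra). rewrite ln_mult in Hl by lra. lra. }
  pose proof (ln_ge_8 k Hk) as Hlnk.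
  assert (Hprod : (k / 2) * (ln k / 2) <= (k - 2 * mm) * L) by (apply Rmult_le_compat; lra).
  lra.
Qed.
End RealBound.

Theorem lemma3p4 :
  exists c : R, (c > 0)%R /\
  exists k0 : nat,
  forall (l : list Point) (steps : list gstep),
    incompressible_spiral l ->
    (k0 <= length (tps l))%nat ->
    grows_from_seed steps l ->
    (c * INR (length (tps l)) * ln (INR (length (tps l))) <= INR (length steps))%R.
Proof.
  exists (/ 8)%R. split; [lra|]. exists (3 ^ 8)%nat.
  intros l steps Hinc Hk0 [Hv Hshape].
  assert (Hk8 : 8 <= length (tps l)) by (assert (8 <= 3 ^ 8) by (simpl; lia); lia).
  assert (HK2 : 2 <= length (tps l)) by lia.
  destruct (run_refines init_state steps init_tree_inv Hv) as [HIF _].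
  destruct Hshape as [w (HszF & Hw0 & HwIn & HwSurj & _ & HwEdge)].
  pose proof (log_len_sum_le_steps l Hinc HK2 _ w HIF HszF Hw0 HwIn HwSurj HwEdge steps Hv eq_refl)
    as Hupper.
  (* with m = k / 4, the same sum is at least (k - 2m) * log2 m *)
  set (m := length (tps l) / 4).
  assert (Hm : 4 * m <= length (tps l) < 4 * m + 4)
    by (pose proof (Nat.div_mod_eq (length (tps l)) 4);
        pose proof (Nat.mod_upper_bound (length (tps l)) 4 ltac:(lia)); unfold m; lia).
  pose proof (log_len_sum_lb l Hinc HK2 m ltac:(lia) ltac:(lia)) as Hlower.
  apply (real_bound _ _ m); auto. lia.
Qed.
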